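(* Let $\varphi$ be the solution described below and let $u_*$ be a point of an open boundary edge $(p_i,p_{i+1})$ of $U$ (so $u_*$ is not a vertex). Then as $u\in U$ tends to $u_*$, $\nabla\varphi(u)\cdot\nu\to+\infty$, where $\nu$ is the outward unit normal to the edge, and $\nabla\varphi(u)\cdot(p_{i+1}-p_i)\to c_i:=b_{i+1}-b_i$.
   Context: $n\ge3$; $p_1,\dots,p_n\in\mathbb{R}^2_{(u_1,u_2)}$ are distinct vertices, in counterclockwise order, of a convex polygon with interior $U$; indices mod $n$ ($p_{n+1}=p_1$, $b_{n+1}=b_1$). $A\ge0$, $V(u)=A+\sum_i\frac{1}{2|u-p_i|}$. For $b_1,\dots,b_n\in\mathbb{R}$, $\varphi:\overline U\to\mathbb{R}$ is the unique continuous convex function, smooth in $U$, with $\det D^2\varphi=V$ in $U$, $\varphi(p_i)=b_i$, and $\varphi$ affine linear on each edge $[p_i,p_{i+1}]$. *)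

From Stdlib Require Import Reals Lra Lia List.
From Coquelicot Require Import Coquelicot.
Open Scope R_scope.

Definition pt := (R * R)%type.

Definition nxt (n i : nat) : nat := Nat.modulo (S i) n.

Definition vsub (a b : pt) : pt := (fst a - fst b, snd a - snd b).
Definition dot (a b : pt) : R := fst a * fst b + snd a * snd b.
Definition cross (a b : pt) : R := fst a * snd b - snd a * fst b.
Definition vnorm (a : pt) : R := sqrt (dot a a).
Definition lerp (a b : pt) (t : R) : pt :=
  ((1 - t) * fst a + t * fst b, (1 - t) * snd a + t * snd b).

(* p_0,...,p_{n-1} are the distinct vertices, in counterclockwise order,
   of a (strictly) convex polygon: every other vertex lies strictly to the
   left of each directed edge [p_i, p_{i+1}]. *)
Definition ccw_convex_polygon (n : nat) (p : nat -> pt) : Prop :=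
  forall i j, (i < n)%nat -> (j < n)%nat -> j <> i -> j <> nxt n i ->
    cross (vsub (p (nxt n i)) (p i)) (vsub (p j) (p i)) > 0.

Definition polyU (n : nat) (p : nat -> pt) (u : pt) : Prop :=
  forall i, (i < n)%nat -> cross (vsub (p (nxt n i)) (p i)) (vsub u (p i)) > 0.
Definition polyUbar (n : nat) (p : nat -> pt) (u : pt) : Prop :=
  forall i, (i < n)%nat -> cross (vsub (p (nxt n i)) (p i)) (vsub u (p i)) >= 0.

Fixpoint sumR (n : nat) (f : nat -> R) : R :=
  match n with O => 0 | S k => sumR k f + f k end.
Definition Vfun (A : R) (n : nat) (p : nat -> pt) (u : pt) : R :=
  A + sumR n (fun i => / (2 * vnorm (vsub u (p i)))).

(* partial derivatives: d = false is d/du1, d = true is d/du2 *)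
Definition pd (d : bool) (f : pt -> R) : pt -> R :=
  fun u => if d then Derive (fun t => f (fst u, t)) (snd u)
           else Derive (fun t => f (t, snd u)) (fst u).
Definition ex_pd (d : bool) (f : pt -> R) (u : pt) : Prop :=
  if d then ex_derive (fun t => f (fst u, t)) (snd u)
  else ex_derive (fun t => f (t, snd u)) (fst u).
Fixpoint iter_pd (ds : list bool) (f : pt -> R) : pt -> R :=
  match ds with nil => f | d :: ds' => pd d (iter_pd ds' f) end.

Definition smooth_on (U : pt -> Prop) (f : pt -> R) : Prop :=
  forall ds : list bool,
    (forall d u, U u -> ex_pd d (iter_pd ds f) u) /\
    (forall u, U u -> continuous (iter_pd ds f) u).

Definition hess_det (f : pt -> R) (u : pt) : R :=
  pd false (pd false f) u * pd true (pd true f) u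
  - pd true (pd false f) u * pd false (pd true f) u.

Definition grad (f : pt -> R) (u : pt) : pt := (pd false f u, pd true f u).

Definition continuous_on (D : pt -> Prop) (f : pt -> R) : Prop :=
  forall u, D u -> filterlim f (within D (locally u)) (locally (f u)).

Definition convex_on (D : pt -> Prop) (f : pt -> R) : Prop :=
  forall x y t, D x -> D y -> 0 <= t <= 1 ->
    f (lerp x y t) <= (1 - t) * f x + t * f y.

Definition is_solution (n : nat) (p : nat -> pt) (A : R) (b : nat -> R)
    (phi : pt -> R) : Prop :=
  continuous_on (polyUbar n p) phi /\
  convex_on (polyUbar n p) phi /\
  smooth_on (polyU n p) phi /\
  (forall u, polyU n p u -> hess_det phi u = Vfun A n p u) /\
  (forall i, (i < n)%nat -> phi (p i) = b i) /\
  (forall i t, (i < n)%nat -> 0 <= t <= 1 ->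
     phi (lerp (p i) (p (nxt n i)) t) = (1 - t) * b i + t * b (nxt n i)).

From Stdlib Require Import Reals Lra Lia List ClassicalEpsilon.
From Coquelicot Require Import Coquelicot.
Open Scope R_scope.

(* Near [ustar] use coordinates [u = ustar + y1 e + y2 e'], with [e = p_(i+1) - p_i] and
   [e'] the inward normal of the same length, on a rectangle [|y1| <= w, 0 <= y2 <= T] that
   meets the boundary only along the edge.  Compare [phi] minus its affine boundary values with
   the barrier [C y2 - k g(y2) (1 - y1^2 / w^2)], where [g(t) = t sqrt(1 + ln(T/t))]:
   convexity of [phi] bounds the difference on the sides of the rectangle, and at an interior
   maximum second differences give [D_ee phi <= 2 k g / w^2] and [D_e'e' phi <= - k g''], whose
   product is [O(k^2)] because [g g''] is bounded; for small [k] this contradicts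
   [det D^2 phi = V >= lambda > 0].  Hence [phi(ustar + h e') - phi(ustar) <= C h - k h sqrt(1 +
   ln(T/h))], which is below [- K h] for any [K] once [h] is small, and the gradient inequality
   of the convex function [phi] together with its continuity up to the boundary turns this into
   [grad phi . e' -> -oo].  The tangential limit needs only convexity: difference quotients
   along [e], which tend to the boundary slope [b_(i+1) - b_i], bracket [grad phi . e]. *)

Lemma Rle_of_le_plus_linear (a b K t0 : R) :
  0 < t0 -> (forall t, 0 < t < t0 -> a <= b + K * t) -> a <= b.
Proof.
  intros Ht0 H.
  destruct (Rle_dec a b) as [h|h]; auto. apply Rnot_le_lt in h.
  set (t := Rmin (t0 / 2) ((a - b) / (2 * (Rabs K + 1)))).
  assert (Hk : 0 <= Rabs K) by apply Rabs_pos.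
  assert (t1 : t <= t0 / 2) by apply Rmin_l.
  assert (t2 : t <= (a - b) / (2 * (Rabs K + 1))) by apply Rmin_r.
  assert (t3 : 0 < t) by (apply Rmin_pos; [lra | apply Rdiv_lt_0_compat; lra]).
  specialize (H t ltac:(lra)).
  assert (K * t <= Rabs K * t) by (apply Rmult_le_compat_r; [lra | apply Rle_abs]).
  assert (Rabs K * t <= (a - b) / 2).
  { apply Rle_trans with ((Rabs K + 1) * ((a - b) / (2 * (Rabs K + 1)))).
    - apply Rmult_le_compat; lra.
    - right; field; lra. }
  lra.
Qed.

Lemma exists_pos_bound_below_all (m : nat) (P : nat -> R -> Prop) :
  (forall j T T', 0 < T' <= T -> P j T -> P j T') ->
  (forall j, (j < m)%nat -> exists T, 0 < T /\ P j T) ->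
  exists T, 0 < T /\ forall j, (j < m)%nat -> P j T.
Proof.
  intros Hmono. induction m as [|m IH]; intros H.
  - exists 1; split; [lra | intros j Hj; lia].
  - destruct IH as [T1 [HT1 H1]]; [intros j Hj; apply H; lia |].
    destruct (H m ltac:(lia)) as [T2 [HT2 H2]].
    assert (HT : 0 < Rmin T1 T2) by (apply Rmin_pos; lra).
    exists (Rmin T1 T2). split; [exact HT |].
    intros j Hj. destruct (Nat.eq_dec j m) as [->|hj].
    + apply Hmono with T2; [split; [exact HT | apply Rmin_r] | exact H2].
    + apply Hmono with T1; [split; [exact HT | apply Rmin_l] | apply H1; lia].
Qed.

Lemma Rabs_triang3 (a b c : R) : Rabs (a + b + c) <= Rabs a + Rabs b + Rabs c.
Proof. eapply Rle_trans; [apply Rabs_triang |]. pose proof (Rabs_triang a b). lra. Qed.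

Definition near_sq (u v : pt) (r : R) : Prop :=
  Rabs (fst v - fst u) < r /\ Rabs (snd v - snd u) < r.

Lemma near_sq_refl (u : pt) (r : R) : 0 < r -> near_sq u u r.
Proof. intros Hr. unfold near_sq. rewrite !Rminus_diag, Rabs_R0. lra. Qed.

Lemma near_sq_le (u v : pt) (r r' : R) : r <= r' -> near_sq u v r -> near_sq u v r'.
Proof. unfold near_sq. lra. Qed.

Lemma within_locally_of_near_sq (D P : pt -> Prop) (u : pt) :
  (exists r, 0 < r /\ forall v, near_sq u v r -> D v -> P v) ->
  within D (locally u) P.
Proof.
  intros [r [Hr H]]. exists (mkposreal r Hr). intros v [h1 h2]. now apply H.
Qed.

Lemma continuous_within_near_sq (D : pt -> Prop) (f : pt -> R) (u : pt) (eps : R) :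
  filterlim f (within D (locally u)) (locally (f u)) -> 0 < eps ->
  exists r, 0 < r /\ forall v, near_sq u v r -> D v -> Rabs (f v - f u) < eps.
Proof.
  intros H He.
  destruct (proj1 (filterlim_locally _ _) H (mkposreal eps He)) as [r Hr].
  exists r. split; [apply cond_pos |]. intros v [h1 h2] hD. now apply (Hr v).
Qed.

Lemma ball_R_of_Rabs (x y : R) (eps : posreal) : Rabs (x - y) < eps -> ball y eps x.
Proof. easy. Qed.

Lemma second_difference_lower_bound (g g' : R -> R) (y g'' r eta : R) :
  0 < r -> (forall t, Rabs (t - y) < r -> is_derive g t (g' t)) -> is_derive g' y g'' ->
  0 < eta ->
  exists tau, 0 < tau /\ forall t, 0 < t < tau ->
    (g'' - eta) * t ^ 2 <= g (y + t) + g (y - t) - 2 * g y.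
Proof.
  intros Hr Hg Hg' Heta.
  apply is_derive_Reals in Hg'.
  destruct (Hg' (eta / 2) ltac:(lra)) as [del Hdel].
  exists (Rmin r del). split; [apply Rmin_pos; [lra | apply cond_pos] |].
  intros t [Htp Htt]. pose proof (Rmin_l r del). pose proof (Rmin_r r del).
  set (sd := fun c => g (y + c) + g (y - c) - 2 * g y - (g'' - eta) * c ^ 2).
  set (sd' := fun c => g' (y + c) - g' (y - c) - (g'' - eta) * (2 * c)).
  assert (HD : forall c, 0 <= c <= t -> derivable_pt_lim sd c (sd' c)).
  { intros c Hc. apply is_derive_Reals. unfold sd, sd'.
    assert (G1 : is_derive g (y + c) (g' (y + c))).
    { apply Hg. replace (y + c - y) with c by ring. rewrite Rabs_pos_eq; lra. }
    assert (G2 : is_derive g (y - c) (g' (y - c))).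
    { apply Hg. replace (y - c - y) with (- c) by ring. rewrite Rabs_Ropp, Rabs_pos_eq; lra. }
    auto_derive.
    - repeat split; [exists (g' (y + c)); exact G1 | exists (g' (y - c)); exact G2].
    - replace (y + - c) with (y - c) by ring. change (fun x : R => g x) with g.
      rewrite (is_derive_unique _ _ _ G1), (is_derive_unique _ _ _ G2). ring. }
  destruct (MVT_cor2 sd sd' 0 t Htp HD) as [c [Hc1 Hc2]].
  assert (Hpos : 0 <= sd' c).
  { assert (A1 := Hdel c ltac:(lra) ltac:(rewrite Rabs_pos_eq; lra)).
    assert (A2 := Hdel (- c) ltac:(lra) ltac:(rewrite Rabs_Ropp, Rabs_pos_eq; lra)).
    replace (y + - c) with (y - c) in A2 by ring.
    apply Rabs_lt_between in A1. apply Rabs_lt_between in A2.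
    destruct A1 as [A1 A1']. destruct A2 as [A2 A2'].
    assert (B1 : g' (y + c) - g' y >= (g'' - eta / 2) * c).
    { assert ((g' (y + c) - g' y) / c * c = g' (y + c) - g' y) by (field; lra). nra. }
    assert (B2 : g' (y - c) - g' y <= - (g'' - eta / 2) * c).
    { assert ((g' (y - c) - g' y) / - c * (- c) = g' (y - c) - g' y) by (field; lra). nra. }
    unfold sd'. nra. }
  assert (Hinc : sd t - sd 0 >= 0) by (rewrite Hc1; nra).
  unfold sd in Hinc. replace (y + 0) with y in Hinc by ring. replace (y - 0) with y in Hinc by ring.
  lra.
Qed.

Lemma continuity_pt_of_eps_delta (f : R -> R) (x : R) :
  (forall eps, 0 < eps -> exists del, 0 < del /\
     forall z, Rabs (z - x) < del -> Rabs (f z - f x) < eps) ->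
  continuity_pt f x.
Proof.
  intros H eps Heps. destruct (H eps Heps) as [del [Hd H2]].
  exists del. split; auto. intros z [_ Hz]. apply H2, Hz.
Qed.

Lemma continuity_pt_of_is_derive (f : R -> R) (x l : R) : is_derive f x l -> continuity_pt f x.
Proof. intros H. apply derivable_continuous_pt. exists l. now apply is_derive_Reals. Qed.

Lemma continuity_2d_pt_of_fst (f : R -> R) (x y : R) :
  continuity_pt f x -> continuity_2d_pt (fun u v => f u) x y.
Proof. intros. apply (continuity_1d_2d_pt_comp f (fun u v => u)); auto. apply continuity_2d_pt_id1. Qed.

Lemma continuity_2d_pt_of_snd (f : R -> R) (x y : R) :
  continuity_pt f y -> continuity_2d_pt (fun u v => f v) x y.
Proof. intros. apply (continuity_1d_2d_pt_comp f (fun u v => v)); auto. apply continuity_2d_pt_id2. Qed.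

Lemma continuity_pt_2d_snd (f : R -> R -> R) (x y : R) :
  continuity_2d_pt f x y -> continuity_pt (fun v => f x v) y.
Proof.
  intros H. apply continuity_pt_of_eps_delta. intros eps He.
  destruct (H (mkposreal eps He)) as [del Hd]. exists del. split; [apply cond_pos |].
  intros z Hz. apply Hd; auto. rewrite Rminus_diag, Rabs_R0. apply cond_pos.
Qed.

Definition clamp (a b x : R) : R := Rmax a (Rmin b x).

Lemma clamp_in (a b x : R) : a <= b -> a <= clamp a b x <= b.
Proof. intros. unfold clamp, Rmax, Rmin. repeat destruct (Rle_dec _ _); lra. Qed.

Lemma clamp_id (a b x : R) : a <= x <= b -> clamp a b x = x.
Proof. intros. unfold clamp, Rmax, Rmin. repeat destruct (Rle_dec _ _); lra. Qed.

Lemma clamp_lipschitz (a b x z : R) : a <= b -> Rabs (clamp a b x - clamp a b z) <= Rabs (x - z).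
Proof.
  intros. unfold clamp, Rmax, Rmin. repeat destruct (Rle_dec _ _);
  unfold Rabs; repeat destruct (Rcase_abs _); lra.
Qed.

Lemma continuity_pt_clamp (a b x : R) : a <= b -> continuity_pt (clamp a b) x.
Proof.
  intros Hab. apply continuity_pt_of_eps_delta. intros eps He. exists eps. split; [exact He |].
  intros z Hz. eapply Rle_lt_trans; [apply clamp_lipschitz, Hab | exact Hz].
Qed.

Lemma continuity_2d_max_on_rectangle (f : R -> R -> R) (a b c d : R) :
  a <= b -> c <= d -> (forall x y, continuity_2d_pt f x y) ->
  exists x0 y0, a <= x0 <= b /\ c <= y0 <= d /\
    forall x y, a <= x <= b -> c <= y <= d -> f x y <= f x0 y0.
Proof.
  intros Hab Hcd Hf.
  assert (Hmy : forall x, { m | c <= m <= d /\ forall y, c <= y <= d -> f x y <= f x m }).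
  { intro x. apply constructive_indefinite_description.
    destruct (continuity_ab_maj (fun y => f x y) c d Hcd) as [m [H1 H2]].
    - intros y _. apply continuity_pt_2d_snd, Hf.
    - exists m; split; auto. }
  set (my := fun x => proj1_sig (Hmy x)).
  assert (Hmy1 : forall x, c <= my x <= d) by (intro x; exact (proj1 (proj2_sig (Hmy x)))).
  assert (Hmy2 : forall x y, c <= y <= d -> f x y <= f x (my x))
    by (intro x; exact (proj2 (proj2_sig (Hmy x)))).
  set (m := fun x => f (clamp a b x) (my (clamp a b x))).
  assert (Hm : forall z, a <= z <= b -> continuity_pt m z).
  { intros z Hz. apply continuity_pt_of_eps_delta. intros eps He.
    destruct (uniform_continuity_2d f a b c d (fun x y _ _ => Hf x y)
                (mkposreal (eps / 2) ltac:(lra))) as [del Hdel].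
    exists del. split; [apply cond_pos |]. intros z' Hz'.
    unfold m. set (x1 := clamp a b z'). set (x2 := clamp a b z).
    assert (Hx1 : a <= x1 <= b) by (apply clamp_in; auto).
    assert (Hx2 : a <= x2 <= b) by (apply clamp_in; auto).
    assert (Hx12 : Rabs (x1 - x2) < del) by (eapply Rle_lt_trans; [apply clamp_lipschitz; auto | auto]).
    assert (Hx21 : Rabs (x2 - x1) < del) by (rewrite Rabs_minus_sym; auto).
    assert (A1 := Hdel x2 (my x2) x1 (my x2) Hx2 (Hmy1 x2) Hx1 (Hmy1 x2) Hx12
                    ltac:(rewrite Rminus_diag, Rabs_R0; apply cond_pos)).
    assert (A2 := Hdel x1 (my x1) x2 (my x1) Hx1 (Hmy1 x1) Hx2 (Hmy1 x1) Hx21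
                    ltac:(rewrite Rminus_diag, Rabs_R0; apply cond_pos)).
    simpl in A1, A2.
    pose proof (Hmy2 x1 (my x2) (Hmy1 x2)). pose proof (Hmy2 x2 (my x1) (Hmy1 x1)).
    apply Rabs_lt_between in A1. apply Rabs_lt_between in A2.
    apply Rabs_lt_between. lra. }
  destruct (continuity_ab_maj m a b Hab Hm) as [x0 [H2 H1]].
  exists (clamp a b x0), (my (clamp a b x0)). split; [apply clamp_in; auto |]. split; [auto |].
  intros x y Hx Hy. specialize (H2 x Hx). unfold m in H2. rewrite (clamp_id a b x Hx) in H2.
  eapply Rle_trans; [apply Hmy2; auto | exact H2].
Qed.

(** * The logarithmic barrier profile *)

(* [g = log_barrier T] has infinite slope at [0], which makes the normal derivative of [phi]
   blow up, while [- g g'' <= 3/4] stays bounded, which lets the barrier dominate [phi]. *)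
Definition log_barrier (T t : R) : R := t * sqrt (1 + ln (T / t)).
Definition log_barrier_d1 (T t : R) : R :=
  sqrt (1 + ln (T / t)) - / (2 * sqrt (1 + ln (T / t))).
Definition log_barrier_d2 (T t : R) : R :=
  - / (2 * t * sqrt (1 + ln (T / t))) - / (4 * t * (1 + ln (T / t)) * sqrt (1 + ln (T / t))).

Lemma log_barrier_0 (T : R) : log_barrier T 0 = 0.
Proof. unfold log_barrier; ring. Qed.

Lemma log_barrier_T (T : R) : 0 < T -> log_barrier T T = T.
Proof.
  intros HT; unfold log_barrier. replace (T / T) with 1 by (field; lra).
  rewrite ln_1, Rplus_0_r, sqrt_1; ring.
Qed.

Lemma one_plus_ln_ratio_ge1 (T t : R) : 0 < t <= T -> 1 <= 1 + ln (T / t).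
Proof.
  intros Ht.
  assert (1 <= T / t).
  { apply Rmult_le_reg_r with t; [lra |]. replace (T / t * t) with T by (field; lra). lra. }
  pose proof (ln_le 1 (T / t) ltac:(lra) H). rewrite ln_1 in *. lra.
Qed.

Lemma log_barrier_bounds (T t : R) : 0 < t <= T -> 0 <= log_barrier T t <= sqrt (T * t).
Proof.
  intros Ht. pose proof (one_plus_ln_ratio_ge1 T t Ht). unfold log_barrier.
  split; [apply Rmult_le_pos; [lra | apply sqrt_pos] |].
  assert (HTt : 0 < T / t) by (apply Rdiv_lt_0_compat; lra).
  assert (1 + ln (T / t) <= T / t) by (pose proof (exp_ineq1_le (ln (T / t))); rewrite exp_ln in *; lra).
  replace (T * t) with (t ^ 2 * (T / t)) by (field; lra).
  rewrite sqrt_mult, sqrt_pow2 by (try apply pow_le; lra).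
  apply Rmult_le_compat_l; [lra | apply sqrt_le_1; lra].
Qed.

Lemma is_derive_log_barrier (T t : R) :
  0 < T -> 0 < t <= T -> is_derive (log_barrier T) t (log_barrier_d1 T t).
Proof.
  intros HT Ht. pose proof (one_plus_ln_ratio_ge1 T t Ht).
  unfold log_barrier, log_barrier_d1. auto_derive.
  - repeat split; try lra. apply Rdiv_lt_0_compat; lra.
  - change (T * / t) with (T / t).
    assert (0 < sqrt (1 + ln (T / t))) by (apply sqrt_lt_R0; lra).
    field. repeat split; lra.
Qed.

Lemma is_derive_log_barrier_d1 (T t : R) :
  0 < T -> 0 < t <= T -> is_derive (log_barrier_d1 T) t (log_barrier_d2 T t).
Proof.
  intros HT Ht. pose proof (one_plus_ln_ratio_ge1 T t Ht).
  assert (HS : 0 < sqrt (1 + ln (T / t))) by (apply sqrt_lt_R0; lra).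
  unfold log_barrier_d1, log_barrier_d2. auto_derive.
  - repeat split; try lra; apply Rdiv_lt_0_compat; lra.
  - change (T * / t) with (T / t).
    assert (HS2 : sqrt (1 + ln (T / t)) * sqrt (1 + ln (T / t)) = 1 + ln (T / t))
      by (apply sqrt_sqrt; lra).
    set (S := sqrt (1 + ln (T / t))) in *.
    assert (E : ln (T / t) = S * S - 1) by (rewrite HS2; ring). clearbody S. rewrite E.
    field. repeat split; lra.
Qed.

Lemma log_barrier_concavity (T t : R) :
  0 < t <= T -> log_barrier_d2 T t < 0 /\ - (log_barrier T t * log_barrier_d2 T t) <= 3 / 4.
Proof.
  intros Ht. pose proof (one_plus_ln_ratio_ge1 T t Ht). unfold log_barrier, log_barrier_d2.
  assert (HS : 1 <= sqrt (1 + ln (T / t))) by (rewrite <- sqrt_1 at 1; apply sqrt_le_1; lra).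
  assert (HS2 : sqrt (1 + ln (T / t)) * sqrt (1 + ln (T / t)) = 1 + ln (T / t))
    by (apply sqrt_sqrt; lra).
  set (S := sqrt (1 + ln (T / t))) in *.
  assert (E : ln (T / t) = S * S - 1) by (rewrite HS2; ring). clearbody S. rewrite E.
  replace (1 + (S * S - 1)) with (S * S) by ring.
  split.
  - assert (0 < / (2 * t * S)) by (apply Rinv_0_lt_compat; nra).
    assert (0 < / (4 * t * (S * S) * S)).
    { apply Rinv_0_lt_compat. assert (0 < S * S) by nra. assert (0 < t * (S * S)) by nra. nra. }
    lra.
  - replace (- (t * S * (- / (2 * t * S) - / (4 * t * (S * S) * S))))
      with (1 / 2 + / (4 * (S * S))) by (field; lra).
    assert (/ (4 * (S * S)) <= / 4) by (apply Rinv_le_contravar; nra).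
    lra.
Qed.

Lemma continuity_pt_log_barrier_clamp (T x : R) :
  0 < T -> continuity_pt (fun t => log_barrier T (clamp 0 T t)) x.
Proof.
  intros HT. pose proof (clamp_in 0 T x ltac:(lra)) as Hc.
  destruct (Req_dec (clamp 0 T x) 0) as [h|h].
  - (* at the boundary [0], continuity comes from [log_barrier T t <= sqrt (T t)] *)
    apply continuity_pt_of_eps_delta. intros eps He.
    exists (eps ^ 2 / T). split; [apply Rdiv_lt_0_compat; nra |].
    intros z Hz. rewrite h, log_barrier_0, Rminus_0_r.
    pose proof (clamp_in 0 T z ltac:(lra)) as Hcz. pose proof (clamp_lipschitz 0 T z x ltac:(lra)) as Hl.
    rewrite h, Rminus_0_r, Rabs_pos_eq in Hl by lra.
    destruct (Req_dec (clamp 0 T z) 0) as [h'|h'].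
    + rewrite h', log_barrier_0, Rabs_R0; auto.
    + pose proof (log_barrier_bounds T (clamp 0 T z) ltac:(lra)) as [B1 B2].
      rewrite Rabs_pos_eq by auto. eapply Rle_lt_trans; [exact B2 |].
      rewrite <- (sqrt_pow2 eps) by lra. apply sqrt_lt_1_alt. split; [nra |].
      apply Rle_lt_trans with (T * Rabs (z - x)); [apply Rmult_le_compat_l; lra |].
      apply Rmult_lt_reg_r with (/ T); [apply Rinv_0_lt_compat; lra |].
      replace (T * Rabs (z - x) * / T) with (Rabs (z - x)) by (field; lra). exact Hz.
  - apply (continuity_pt_comp (clamp 0 T) (log_barrier T)); [apply continuity_pt_clamp; lra |].
    apply (continuity_pt_of_is_derive _ _ (log_barrier_d1 T (clamp 0 T x))).
    apply is_derive_log_barrier; lra.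
Qed.

(** * Second-order expansion and convexity *)

Definition interior_point (U : pt -> Prop) (u : pt) : Prop :=
  exists r, 0 < r /\ forall v, near_sq u v r -> U v.

Definition along (u d : pt) (t : R) : pt := (fst u + t * fst d, snd u + t * snd d).

Definition hess_form (phi : pt -> R) (u d : pt) : R :=
  pd false (pd false phi) u * fst d ^ 2 + 2 * pd false (pd true phi) u * fst d * snd d
  + pd true (pd true phi) u * snd d ^ 2.

Lemma continuity_2d_pt_of_continuous (g : pt -> R) (x y : R) :
  continuous g (x, y) -> continuity_2d_pt (fun a b => g (a, b)) x y.
Proof.
  intros H. apply continuity_2d_pt_filterlim.
  eapply filterlim_ext; [| exact H]. now intros [a b].
Qed.

Lemma ex_diff_n_iter_pd (U : pt -> Prop) (phi : pt -> R) :
  smooth_on U phi ->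
  forall k ds x y, U (x, y) -> ex_diff_n (fun a b => iter_pd ds phi (a, b)) k x y.
Proof.
  intros Hs k. induction k as [|k IH]; intros ds x y Hu; simpl.
  - split; auto. apply continuity_2d_pt_of_continuous, (proj2 (Hs ds)), Hu.
  - repeat split.
    + apply continuity_2d_pt_of_continuous, (proj2 (Hs ds)), Hu.
    + exact (proj1 (Hs ds) false (x, y) Hu).
    + exact (proj1 (Hs ds) true (x, y) Hu).
    + exact (IH (false :: ds) x y Hu).
    + exact (IH (true :: ds) x y Hu).
Qed.

Lemma DL_pol_2 (f : R -> R -> R) (x y dx dy : R) :
  DL_pol 2 f x y dx dy =
  f x y + Derive (fun t => f t y) x * dx + Derive (fun t => f x t) y * dy
  + (Derive (fun t => Derive (fun z => f z y) t) x * dx ^ 2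
     + 2 * Derive (fun t => Derive (fun z => f t z) y) x * dx * dy
     + Derive (fun t => Derive (fun z => f x z) t) y * dy ^ 2) / 2.
Proof.
  unfold DL_pol, differential, partial_derive. simpl.
  unfold Binomial.C; simpl. field.
Qed.

Lemma taylor2_remainder (U : pt -> Prop) (phi : pt -> R) (u : pt) :
  smooth_on U phi -> interior_point U u ->
  exists D r, 0 < r /\ forall v, near_sq u v r ->
    Rabs (phi v - (phi u + dot (grad phi u) (vsub v u) + hess_form phi u (vsub v u) / 2))
      <= D * Rmax (Rabs (fst v - fst u)) (Rabs (snd v - snd u)) ^ 3.
Proof.
  destruct u as [x y]. intros Hs [r0 [Hr0 HU]].
  destruct (Taylor_Lagrange_2d (fun a b => phi (a, b)) 2 x y) as [D [r HD]].
  { exists (mkposreal r0 Hr0). intros a b h1 h2.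
    apply (ex_diff_n_iter_pd U phi Hs 3 nil). apply HU. split; assumption. }
  exists D, r. split; [apply cond_pos |]. intros [a b] [h1 h2].
  specialize (HD a b h1 h2). rewrite DL_pol_2 in HD.
  unfold dot, grad, hess_form, pd, vsub; simpl in *. rewrite <- Rplus_assoc. exact HD.
Qed.

Definition dir_size (d : pt) : R := Rabs (fst d) + Rabs (snd d) + 1.

Lemma dir_size_ge1 (d : pt) : 1 <= dir_size d.
Proof. unfold dir_size. pose proof (Rabs_pos (fst d)). pose proof (Rabs_pos (snd d)). lra. Qed.

Lemma along_step_le (u d : pt) (t : R) :
  Rabs (fst (along u d t) - fst u) <= Rabs t * dir_size d /\
  Rabs (snd (along u d t) - snd u) <= Rabs t * dir_size d.
Proof.
  unfold along, dir_size; simpl.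
  replace (fst u + t * fst d - fst u) with (t * fst d) by ring.
  replace (snd u + t * snd d - snd u) with (t * snd d) by ring.
  rewrite !Rabs_mult. pose proof (Rabs_pos t). pose proof (Rabs_pos (fst d)). pose proof (Rabs_pos (snd d)).
  split; apply Rmult_le_compat_l; lra.
Qed.

Lemma near_sq_along (u d : pt) (t r : R) : Rabs t < r / dir_size d -> near_sq u (along u d t) r.
Proof.
  intros Ht. pose proof (dir_size_ge1 d). destruct (along_step_le u d t) as [E1 E2].
  assert (Rabs t * dir_size d < r).
  { apply Rmult_lt_reg_r with (/ dir_size d); [apply Rinv_0_lt_compat; lra |].
    replace (Rabs t * dir_size d * / dir_size d) with (Rabs t) by (field; lra). exact Ht. }
  split; lra.
Qed.

Lemma taylor2_along (U : pt -> Prop) (phi : pt -> R) (u d : pt) :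
  smooth_on U phi -> interior_point U u ->
  exists D r, 0 < r /\ forall t, Rabs t < r ->
    Rabs (phi (along u d t) - phi u - t * dot (grad phi u) d - t ^ 2 / 2 * hess_form phi u d)
      <= D * Rabs t ^ 3.
Proof.
  intros Hs Ho.
  destruct (taylor2_remainder U phi u Hs Ho) as [D [r [Hr HD]]].
  pose proof (dir_size_ge1 d).
  exists (Rabs D * dir_size d ^ 3), (r / dir_size d). split; [apply Rdiv_lt_0_compat; lra |].
  intros t Ht. specialize (HD _ (near_sq_along u d t r Ht)).
  destruct (along_step_le u d t) as [E1 E2].
  assert (Hv : vsub (along u d t) u = (t * fst d, t * snd d)) by (unfold vsub, along; simpl; f_equal; ring).
  replace (phi (along u d t) - phi u - t * dot (grad phi u) d - t ^ 2 / 2 * hess_form phi u d)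
    with (phi (along u d t) - (phi u + dot (grad phi u) (vsub (along u d t) u)
                               + hess_form phi u (vsub (along u d t) u) / 2))
    by (rewrite Hv; unfold dot, hess_form; simpl; field).
  eapply Rle_trans; [exact HD |].
  set (m := Rmax (Rabs (fst (along u d t) - fst u)) (Rabs (snd (along u d t) - snd u))).
  assert (HM0 : 0 <= m) by (eapply Rle_trans; [apply Rabs_pos | apply Rmax_l]).
  assert (HM : m <= Rabs t * dir_size d) by (apply Rmax_lub; auto).
  apply Rle_trans with (Rabs D * m ^ 3).
  - apply Rmult_le_compat_r; [apply pow_le; auto | apply Rle_abs].
  - replace (Rabs D * dir_size d ^ 3 * Rabs t ^ 3) with (Rabs D * (Rabs t * dir_size d) ^ 3) by ring.
    apply Rmult_le_compat_l; [apply Rabs_pos | apply pow_incr; auto].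
Qed.

Lemma interior_point_along (U : pt -> Prop) (u d : pt) :
  interior_point U u -> exists t0, 0 < t0 /\ forall t, Rabs t < t0 -> U (along u d t).
Proof.
  intros [r0 [Hr0 HU]]. pose proof (dir_size_ge1 d).
  exists (r0 / dir_size d). split; [apply Rdiv_lt_0_compat; lra |].
  intros t Ht. apply HU, near_sq_along, Ht.
Qed.

Lemma second_difference_taylor (U : pt -> Prop) (phi : pt -> R) (u d : pt) :
  smooth_on U phi -> interior_point U u ->
  exists K r, 0 < r /\ forall t, 0 < t < r ->
    Rabs (phi (along u d t) + phi (along u d (- t)) - 2 * phi u - t ^ 2 * hess_form phi u d)
      <= 2 * K * t ^ 3.
Proof.
  intros Hs Ho.
  destruct (taylor2_along U phi u d Hs Ho) as [K [r [Hr HK]]].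
  exists K, r. split; [exact Hr |]. intros t Ht.
  pose proof (HK t ltac:(rewrite Rabs_pos_eq; lra)) as E1.
  pose proof (HK (- t) ltac:(rewrite Rabs_Ropp, Rabs_pos_eq; lra)) as E2.
  rewrite (Rabs_Ropp t), (Rabs_pos_eq t) in E2 by lra. rewrite (Rabs_pos_eq t) in E1 by lra.
  replace (phi (along u d t) + phi (along u d (- t)) - 2 * phi u - t ^ 2 * hess_form phi u d)
    with ((phi (along u d t) - phi u - t * dot (grad phi u) d - t ^ 2 / 2 * hess_form phi u d)
          + (phi (along u d (- t)) - phi u - (- t) * dot (grad phi u) d
             - (- t) ^ 2 / 2 * hess_form phi u d)) by field.
  eapply Rle_trans; [apply Rabs_triang | lra].
Qed.

Lemma convex_hess_form_nonneg (U D : pt -> Prop) (phi : pt -> R) (u d : pt) :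
  smooth_on U phi -> (forall v, U v -> D v) -> convex_on D phi -> interior_point U u ->
  0 <= hess_form phi u d.
Proof.
  intros Hs HUD Hc Ho.
  destruct (second_difference_taylor U phi u d Hs Ho) as [K [r [Hr HK]]].
  destruct (interior_point_along U u d Ho) as [r0 [Hr0 HU]].
  apply (Rle_of_le_plus_linear 0 _ (2 * K) (Rmin r r0)); [apply Rmin_pos; lra |].
  intros t [Htp Htt]. pose proof (Rmin_l r r0). pose proof (Rmin_r r r0).
  assert (Hmid : lerp (along u d t) (along u d (- t)) (1 / 2) = u).
  { destruct u; unfold lerp, along; simpl; f_equal; field. }
  pose proof (Hc _ _ (1 / 2) (HUD _ (HU t ltac:(rewrite Rabs_pos_eq; lra)))
                (HUD _ (HU (- t) ltac:(rewrite Rabs_Ropp, Rabs_pos_eq; lra))) ltac:(lra)) as Hconv.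
  rewrite Hmid in Hconv.
  specialize (HK t ltac:(lra)). apply Rabs_le_between in HK.
  assert (0 < t ^ 2) by (apply pow_lt; lra).
  apply Rmult_le_reg_l with (t ^ 2); [assumption |].
  replace (t ^ 2 * (hess_form phi u d + 2 * K * t)) with (t ^ 2 * hess_form phi u d + 2 * K * t ^ 3) by ring.
  lra.
Qed.

Lemma hess_form_le_of_second_difference (U : pt -> Prop) (phi : pt -> R) (u d : pt) (c : R) :
  smooth_on U phi -> interior_point U u ->
  (forall eta, 0 < eta -> exists t0, 0 < t0 /\ forall t, 0 < t < t0 ->
     phi (along u d t) + phi (along u d (- t)) - 2 * phi u <= (c + eta) * t ^ 2) ->
  hess_form phi u d <= c.
Proof.
  intros Hs Ho H.
  destruct (second_difference_taylor U phi u d Hs Ho) as [K [r [Hr HK]]].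
  apply (Rle_of_le_plus_linear _ _ 1 1); [lra |]. intros eta [He _].
  destruct (H eta He) as [t0 [Ht0 Hsd]].
  apply (Rle_of_le_plus_linear _ _ (2 * K) (Rmin r t0)); [apply Rmin_pos; lra |].
  intros t [Htp Htt]. pose proof (Rmin_l r t0). pose proof (Rmin_r r t0).
  specialize (HK t ltac:(lra)). apply Rabs_le_between in HK. specialize (Hsd t ltac:(lra)).
  assert (0 < t ^ 2) by (apply pow_lt; lra).
  apply Rmult_le_reg_l with (t ^ 2); [assumption |].
  replace (t ^ 2 * (c + 1 * eta + 2 * K * t)) with ((c + eta) * t ^ 2 + 2 * K * t ^ 3) by ring.
  lra.
Qed.

Lemma convex_grad_slope_le (U D : pt -> Prop) (phi : pt -> R) (u d : pt) (h : R) :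
  smooth_on U phi -> (forall v, U v -> D v) -> convex_on D phi -> interior_point U u ->
  0 < h -> D (along u d h) ->
  h * dot (grad phi u) d <= phi (along u d h) - phi u.
Proof.
  intros Hs HUD Hc Ho Hh HD.
  assert (HU0 : U u) by (destruct Ho as [r0 [Hr0 HU]]; apply HU, near_sq_refl, Hr0).
  destruct (taylor2_along U phi u d Hs Ho) as [K [r [Hr HK]]].
  set (Q := hess_form phi u d). set (L := dot (grad phi u) d). fold Q L in HK.
  assert (Hrh : 0 < Rmin 1 (r / h)) by (apply Rmin_pos; [lra | apply Rdiv_lt_0_compat; lra]).
  apply (Rle_of_le_plus_linear _ _ (h ^ 2 * Rabs Q / 2 + Rabs K * h ^ 3) _ Hrh).
  intros t [Htp Htt]. pose proof (Rmin_l 1 (r / h)). pose proof (Rmin_r 1 (r / h)).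
  assert (Hlerp : lerp u (along u d h) t = along u d (t * h))
    by (unfold lerp, along; simpl; f_equal; ring).
  pose proof (Hc u (along u d h) t (HUD _ HU0) HD ltac:(lra)) as Hct. rewrite Hlerp in Hct.
  assert (Hth : t * h < r).
  { apply Rmult_lt_reg_r with (/ h); [apply Rinv_0_lt_compat; lra |].
    replace (t * h * / h) with t by (field; lra). unfold Rdiv in *; lra. }
  pose proof (HK (t * h) ltac:(rewrite Rabs_pos_eq; nra)) as E.
  rewrite (Rabs_pos_eq (t * h)) in E by nra. apply Rabs_le_between in E.
  assert (A1 : - (t ^ 2 * (h ^ 2 * Rabs Q / 2)) <= (t * h) ^ 2 / 2 * Q).
  { replace ((t * h) ^ 2 / 2 * Q) with (t ^ 2 * (h ^ 2 / 2 * Q)) by field.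
    assert (0 <= t ^ 2) by (apply pow_le; lra).
    assert (- (h ^ 2 * Rabs Q / 2) <= h ^ 2 / 2 * Q).
    { pose proof (Rle_abs (- Q)) as HQ. rewrite Rabs_Ropp in HQ.
      assert (0 <= h ^ 2) by (apply pow_le; lra). nra. }
    nra. }
  assert (A2 : K * (t * h) ^ 3 <= t ^ 2 * (Rabs K * h ^ 3)).
  { replace (K * (t * h) ^ 3) with ((K * h ^ 3) * t ^ 3) by ring.
    assert (t ^ 3 <= t ^ 2)
      by (replace (t ^ 3) with (t ^ 2 * t) by ring; assert (0 < t ^ 2) by (apply pow_lt; lra); nra).
    assert (0 < h ^ 3) by (apply pow_lt; lra).
    assert (K * h ^ 3 <= Rabs K * h ^ 3) by (apply Rmult_le_compat_r; [lra | apply Rle_abs]).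
    assert (0 < t ^ 3) by (apply pow_lt; lra).
    destruct (Rle_dec 0 (K * h ^ 3)); nra. }
  assert (t * (h * L) <= t * (phi (along u d h) - phi u + (h ^ 2 * Rabs Q / 2 + Rabs K * h ^ 3) * t))
    by nra.
  apply Rmult_le_reg_l with t; lra.
Qed.

Lemma smooth_mixed_partials_eq (U : pt -> Prop) (phi : pt -> R) (u : pt) :
  smooth_on U phi -> interior_point U u ->
  pd false (pd true phi) u = pd true (pd false phi) u.
Proof.
  destruct u as [x y]. intros Hs [r0 [Hr0 HU]].
  assert (HUu : U (x, y)) by (apply HU, near_sq_refl, Hr0).
  apply (Schwarz (fun a c => phi (a, c)) x y).
  - exists (mkposreal r0 Hr0). intros a c ha hc.
    assert (HUac : U (a, c)) by (apply HU; split; assumption).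
    repeat split.
    + exact (proj1 (Hs nil) false (a, c) HUac).
    + exact (proj1 (Hs nil) true (a, c) HUac).
    + exact (proj1 (Hs (true :: nil)) false (a, c) HUac).
    + exact (proj1 (Hs (false :: nil)) true (a, c) HUac).
  - apply (continuity_2d_pt_of_continuous (iter_pd (false :: true :: nil) phi)).
    apply (proj2 (Hs _)), HUu.
  - apply (continuity_2d_pt_of_continuous (iter_pd (true :: false :: nil) phi)).
    apply (proj2 (Hs _)), HUu.
Qed.

Lemma hess_form_orthogonal_product (phi : pt -> R) (u : pt) (e1 e2 : R) :
  pd false (pd true phi) u = pd true (pd false phi) u ->
  hess_det phi u * (e1 ^ 2 + e2 ^ 2) ^ 2 <= hess_form phi u (e1, e2) * hess_form phi u (- e2, e1).
Proof.
  intros Hsym. unfold hess_det, hess_form. rewrite <- Hsym. cbn [fst snd].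
  set (a11 := pd false (pd false phi) u). set (a12 := pd false (pd true phi) u).
  set (a22 := pd true (pd true phi) u).
  set (m := a11 * e1 * (- e2) + a12 * (e1 * e1 - e2 * e2) + a22 * e2 * e1).
  apply Rle_trans with ((a11 * a22 - a12 * a12) * (e1 ^ 2 + e2 ^ 2) ^ 2 + m ^ 2).
  - pose proof (pow2_ge_0 m). lra.
  - right. unfold m. ring.
Qed.

(** * Coordinates adapted to an edge *)

Lemma nxt_cases (n i : nat) : (i < n)%nat ->
  ((S i < n)%nat /\ nxt n i = S i) \/ (S i = n /\ nxt n i = 0%nat).
Proof.
  intros Hi. unfold nxt. destruct (Nat.eq_dec (S i) n) as [h|h].
  - right. split; auto. rewrite h. apply Nat.Div0.mod_same.
  - left. split; [lia | apply Nat.mod_small; lia].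
Qed.

Lemma nxt_lt (n i : nat) : (i < n)%nat -> (nxt n i < n)%nat.
Proof. intros Hi. destruct (nxt_cases n i Hi) as [[h1 h2]|[h1 h2]]; lia. Qed.

Definition edge_side (n : nat) (p : nat -> pt) (j : nat) (v : pt) : R :=
  cross (vsub (p (nxt n j)) (p j)) (vsub v (p j)).

Lemma edge_side_lerp (n : nat) (p : nat -> pt) (j : nat) (a b : pt) (t : R) :
  edge_side n p j (lerp a b t) = (1 - t) * edge_side n p j a + t * edge_side n p j b.
Proof. unfold edge_side, cross, vsub, lerp; simpl. ring. Qed.

Lemma edge_side_vertex_nonneg (n : nat) (p : nat -> pt) (j k : nat) :
  ccw_convex_polygon n p -> (j < n)%nat -> (k < n)%nat -> 0 <= edge_side n p j (p k).
Proof.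
  intros Hc Hj Hk. destruct (Nat.eq_dec k j) as [->|h1].
  - unfold edge_side, cross, vsub; simpl. right; ring.
  - destruct (Nat.eq_dec k (nxt n j)) as [->|h2].
    + unfold edge_side, cross, vsub; simpl. right; ring.
    + left. apply Hc; auto.
Qed.

Lemma polyU_polyUbar (n : nat) (p : nat -> pt) (u : pt) : polyU n p u -> polyUbar n p u.
Proof. intros H j Hj. left. apply H, Hj. Qed.

Lemma sumR_ge_first (m : nat) (f : nat -> R) :
  (forall k, 0 <= f k) -> (1 <= m)%nat -> f 0%nat <= sumR m f.
Proof.
  intros H. induction m as [|m IH]; intros Hm; [lia |]. simpl. destruct m.
  - simpl. lra.
  - pose proof (IH ltac:(lia)). pose proof (H (S m)). lra.
Qed.

Lemma Rinv_nonneg (x : R) : 0 <= x -> 0 <= / x.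
Proof. intros [h|h]; [left; apply Rinv_0_lt_compat; auto | rewrite <- h, Rinv_0; lra]. Qed.

Lemma inv_two_vnorm_ge (z : pt) (B : R) :
  (fst z <> 0 \/ snd z <> 0) -> Rabs (fst z) + Rabs (snd z) <= B -> / (2 * B) <= / (2 * vnorm z).
Proof.
  destruct z as [z1 z2]; simpl. intros Hz HB.
  assert (Hd : 0 < z1 * z1 + z2 * z2) by (destruct Hz; nra).
  assert (Hv : 0 < vnorm (z1, z2)) by (unfold vnorm, dot; simpl; apply sqrt_lt_R0; lra).
  assert (Hv2 : vnorm (z1, z2) <= Rabs z1 + Rabs z2).
  { pose proof (Rabs_pos z1); pose proof (Rabs_pos z2).
    unfold vnorm, dot; simpl. rewrite <- (sqrt_square (Rabs z1 + Rabs z2)) by lra.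
    apply sqrt_le_1_alt.
    assert (z1 * z1 = Rabs z1 * Rabs z1) by (rewrite <- Rabs_mult, Rabs_pos_eq; nra).
    assert (z2 * z2 = Rabs z2 * Rabs z2) by (rewrite <- Rabs_mult, Rabs_pos_eq; nra).
    nra. }
  apply Rinv_le_contravar; lra.
Qed.

Section EdgeChart.
Variable n : nat.
Variable p : nat -> pt.
Variable i : nat.
Variable s : R.
Hypothesis Hn : (3 <= n)%nat.
Hypothesis Hc : ccw_convex_polygon n p.
Hypothesis Hi : (i < n)%nat.
Hypothesis Hs : 0 < s < 1.

Definition e1 : R := fst (vsub (p (nxt n i)) (p i)).
Definition e2 : R := snd (vsub (p (nxt n i)) (p i)).
Definition elen2 : R := e1 ^ 2 + e2 ^ 2.
Definition ustar : pt := lerp (p i) (p (nxt n i)) s.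

(* [frame a1 a2 = a1 e + a2 e'], where [e'] is [e] rotated by a quarter turn
   counterclockwise: the inward normal to the edge, of length [|e|]. *)
Definition frame (a1 a2 : R) : pt := (a1 * e1 - a2 * e2, a1 * e2 + a2 * e1).
Definition chart (y1 y2 : R) : pt := (fst ustar + fst (frame y1 y2), snd ustar + snd (frame y1 y2)).
Definition coord1 (u : pt) : R := ((fst u - fst ustar) * e1 + (snd u - snd ustar) * e2) / elen2.
Definition coord2 (u : pt) : R := (e1 * (snd u - snd ustar) - e2 * (fst u - fst ustar)) / elen2.

Definition half_width : R := Rmin s (1 - s) / 2.

Lemma elen2_pos : 0 < elen2.
Proof.
  assert (exists k, (k < n)%nat /\ k <> i /\ k <> nxt n i) as [k [Hk1 [Hk2 Hk3]]].
  { destruct (nxt_cases n i Hi) as [[h1 h2]|[h1 h2]]; rewrite h2.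
    - destruct (Nat.eq_dec i 0) as [->|h]; [exists 2%nat | exists 0%nat]; lia.
    - exists 1%nat; lia. }
  pose proof (Hc i k Hi Hk1 Hk2 Hk3) as H. unfold elen2, e1, e2. unfold cross in H.
  destruct (vsub (p (nxt n i)) (p i)) as [a b]; simpl in *.
  destruct (Req_dec a 0) as [->|ha]; [destruct (Req_dec b 0) as [->|hb] |]; nra.
Qed.

Lemma half_width_spec : 0 < half_width /\ half_width < s /\ half_width < 1 - s.
Proof. unfold half_width, Rmin; destruct (Rle_dec _ _); lra. Qed.

Lemma chart_shift (y1 y2 a1 a2 t : R) :
  chart (y1 + t * a1) (y2 + t * a2) = along (chart y1 y2) (frame a1 a2) t.
Proof. unfold chart, along, frame; simpl. f_equal; ring. Qed.

Lemma chart_0_0 : chart 0 0 = ustar.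
Proof. unfold chart, frame. destruct ustar; simpl; f_equal; ring. Qed.

Lemma chart_edge (y1 : R) : chart y1 0 = lerp (p i) (p (nxt n i)) (s + y1).
Proof. unfold chart, frame, ustar, lerp, e1, e2, vsub; simpl. f_equal; ring. Qed.

Lemma chart_coord (u : pt) : chart (coord1 u) (coord2 u) = u.
Proof.
  destruct u as [a b]. pose proof elen2_pos. unfold chart, frame, coord1, coord2; simpl.
  unfold elen2 in *. f_equal; field; lra.
Qed.

Lemma coord1_chart (y1 y2 : R) : coord1 (chart y1 y2) = y1.
Proof. pose proof elen2_pos. unfold coord1, chart, frame, elen2 in *; simpl. field. lra. Qed.

Lemma coord2_chart (y1 y2 : R) : coord2 (chart y1 y2) = y2.
Proof. pose proof elen2_pos. unfold coord2, chart, frame, elen2 in *; simpl. field. lra. Qed.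

Lemma edge_side_chart (y1 y2 : R) : edge_side n p i (chart y1 y2) = y2 * elen2.
Proof. unfold edge_side, chart, frame, ustar, elen2, e1, e2, cross, vsub, lerp; simpl. ring. Qed.

Lemma coord2_pos (u : pt) : polyU n p u -> 0 < coord2 u.
Proof.
  intros Hu. pose proof (Hu i Hi) as H. fold (edge_side n p i u) in H.
  rewrite <- (chart_coord u), edge_side_chart in H. pose proof elen2_pos. nra.
Qed.

Lemma edge_side_ends_pos (j : nat) : (j < n)%nat -> j <> i ->
  0 < edge_side n p j (p i) + edge_side n p j (p (nxt n i)).
Proof.
  intros Hj hji.
  pose proof (edge_side_vertex_nonneg n p j i Hc Hj Hi).
  pose proof (edge_side_vertex_nonneg n p j (nxt n i) Hc Hj (nxt_lt n i Hi)).
  destruct (Nat.eq_dec i (nxt n j)) as [h|h].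
  - assert (0 < edge_side n p j (p (nxt n i))); [| lra].
    pose proof (nxt_lt n i Hi). apply Hc; auto;
      destruct (nxt_cases n j Hj) as [[a1 a2]|[a1 a2]];
      destruct (nxt_cases n i Hi) as [[b1 b2]|[b1 b2]]; lia.
  - assert (0 < edge_side n p j (p i)); [apply Hc; auto | lra].
Qed.

Lemma edge_side_chart_pos (j : nat) : (j < n)%nat -> j <> i ->
  exists T, 0 < T /\ forall y1 y2, Rabs y1 <= half_width -> 0 <= y2 <= T ->
    0 < edge_side n p j (chart y1 y2).
Proof.
  intros Hj hji.
  assert (Hw : 0 < half_width /\ half_width <= s / 2 /\ half_width <= (1 - s) / 2)
    by (unfold half_width, Rmin; destruct (Rle_dec _ _); lra).
  set (qP := edge_side n p j (p i)). set (qQ := edge_side n p j (p (nxt n i))).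
  pose proof (edge_side_vertex_nonneg n p j i Hc Hj Hi) as HqP.
  pose proof (edge_side_vertex_nonneg n p j (nxt n i) Hc Hj (nxt_lt n i Hi)) as HqQ.
  pose proof (edge_side_ends_pos j Hj hji) as Hpos. fold qP qQ in HqP, HqQ, Hpos.
  set (cj := cross (vsub (p (nxt n j)) (p j)) (frame 0 1)). pose proof (Rabs_pos cj).
  set (mu := half_width * (qP + qQ)).
  assert (Hmu : 0 < mu) by (apply Rmult_lt_0_compat; lra).
  exists (mu / (Rabs cj + 1)). split; [apply Rdiv_lt_0_compat; lra |].
  intros y1 y2 hy1 hy2.
  replace (chart y1 y2) with (along (chart y1 0) (frame 0 1) y2)
    by (rewrite <- chart_shift; f_equal; ring).
  assert (Hside : edge_side n p j (along (chart y1 0) (frame 0 1) y2)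
                  = edge_side n p j (chart y1 0) + y2 * cj)
    by (unfold edge_side, along, cj, cross, vsub; simpl; ring).
  rewrite Hside, chart_edge, edge_side_lerp. fold qP qQ.
  assert (Hm0 : mu <= (1 - (s + y1)) * qP + (s + y1) * qQ)
    by (unfold mu; apply Rabs_le_between in hy1; nra).
  assert (y2 * Rabs cj < mu).
  { apply Rle_lt_trans with (mu / (Rabs cj + 1) * Rabs cj); [apply Rmult_le_compat_r; lra |].
    apply Rlt_le_trans with (mu / (Rabs cj + 1) * (Rabs cj + 1)).
    - apply Rmult_lt_compat_l; [apply Rdiv_lt_0_compat |]; lra.
    - right; field; lra. }
  assert (- (y2 * Rabs cj) <= y2 * cj).
  { pose proof (Rle_abs (- cj)) as Hab. rewrite Rabs_Ropp in Hab. nra. }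
  lra.
Qed.

Lemma exists_rectangle_height : exists T, 0 < T /\ forall j, (j < n)%nat -> j <> i ->
  forall y1 y2, Rabs y1 <= half_width -> 0 <= y2 <= T -> 0 < edge_side n p j (chart y1 y2).
Proof.
  destruct (exists_pos_bound_below_all n (fun j T => j <> i -> forall y1 y2,
             Rabs y1 <= half_width -> 0 <= y2 <= T -> 0 < edge_side n p j (chart y1 y2)))
    as [T [HT HTj]].
  - intros j T T' HT' H hj y1 y2 hy1 hy2. apply H; auto. lra.
  - intros j Hj. destruct (Nat.eq_dec j i) as [->|hji].
    + exists 1. split; [lra | intro h; contradiction].
    + destruct (edge_side_chart_pos j Hj hji) as [T [HT H]]. exists T. auto.
  - exists T. split; [auto |]. intros j Hj hji; apply HTj; auto.
Qed.

Definition height : R := proj1_sig (constructive_indefinite_description _ exists_rectangle_height).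

Lemma height_spec : 0 < height /\ forall j, (j < n)%nat -> j <> i ->
  forall y1 y2, Rabs y1 <= half_width -> 0 <= y2 <= height -> 0 < edge_side n p j (chart y1 y2).
Proof. exact (proj2_sig (constructive_indefinite_description _ exists_rectangle_height)). Qed.

Lemma height_pos : 0 < height.
Proof. exact (proj1 height_spec). Qed.

Lemma chart_polyU (y1 y2 : R) :
  Rabs y1 <= half_width -> 0 < y2 <= height -> polyU n p (chart y1 y2).
Proof.
  intros h1 h2 j Hj. fold (edge_side n p j (chart y1 y2)).
  destruct (Nat.eq_dec j i) as [->|h].
  - rewrite edge_side_chart. pose proof elen2_pos. nra.
  - apply (proj2 height_spec); auto. lra.
Qed.

Lemma chart_polyUbar (y1 y2 : R) :
  Rabs y1 <= half_width -> 0 <= y2 <= height -> polyUbar n p (chart y1 y2).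
Proof.
  intros h1 h2 j Hj. fold (edge_side n p j (chart y1 y2)).
  destruct (Nat.eq_dec j i) as [->|h].
  - rewrite edge_side_chart. pose proof elen2_pos. nra.
  - left. apply (proj2 height_spec); auto.
Qed.

Definition coord_lip : R := (Rabs e1 + Rabs e2 + 1) / elen2.

Lemma coord_lip_pos : 0 < coord_lip.
Proof.
  unfold coord_lip. pose proof elen2_pos. pose proof (Rabs_pos e1). pose proof (Rabs_pos e2).
  apply Rdiv_lt_0_compat; lra.
Qed.

Lemma coords_near (u v : pt) (rho : R) : 0 < rho -> near_sq u v (rho / coord_lip) ->
  Rabs (coord1 v - coord1 u) <= rho /\ Rabs (coord2 v - coord2 u) <= rho.
Proof.
  destruct u as [c d], v as [a b]. intros Hrho [H1 H2]; simpl in H1, H2.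
  pose proof elen2_pos. pose proof coord_lip_pos. pose proof (Rabs_pos e1). pose proof (Rabs_pos e2).
  set (r := rho / coord_lip) in *.
  assert (Hr : 0 <= r) by (eapply Rle_trans; [apply Rabs_pos | left; exact H1]).
  assert (E1 : coord1 (a, b) - coord1 (c, d) = ((a - c) * e1 + (b - d) * e2) / elen2)
    by (unfold coord1; simpl; field; lra).
  assert (E2 : coord2 (a, b) - coord2 (c, d) = (e1 * (b - d) + - (e2 * (a - c))) / elen2)
    by (unfold coord2; simpl; field; lra).
  assert (Hlip : (r * Rabs e1 + r * Rabs e2 + r) / elen2 = rho)
    by (unfold r, coord_lip; field; repeat split; lra).
  rewrite E1, E2, <- Hlip. unfold Rdiv. rewrite !Rabs_mult, (Rabs_pos_eq (/ elen2))
    by (left; apply Rinv_0_lt_compat; lra).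
  assert (0 < / elen2) by (apply Rinv_0_lt_compat; lra).
  assert (B1 : Rabs (a - c) * Rabs e1 <= r * Rabs e1) by (apply Rmult_le_compat_r; lra).
  assert (B2 : Rabs (b - d) * Rabs e2 <= r * Rabs e2) by (apply Rmult_le_compat_r; lra).
  assert (B3 : Rabs e1 * Rabs (b - d) <= r * Rabs e1) by (rewrite Rmult_comm; apply Rmult_le_compat_r; lra).
  assert (B4 : Rabs e2 * Rabs (a - c) <= r * Rabs e2) by (rewrite Rmult_comm; apply Rmult_le_compat_r; lra).
  split; apply Rmult_le_compat_r; try lra; eapply Rle_trans; try apply Rabs_triang;
    rewrite ?Rabs_Ropp, !Rabs_mult; lra.
Qed.

Lemma interior_point_chart (y1 y2 : R) :
  Rabs y1 < half_width -> 0 < y2 < height -> interior_point (polyU n p) (chart y1 y2).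
Proof.
  intros h1 h2.
  pose proof (Rmin_l (half_width - Rabs y1) (Rmin (y2 / 2) (height - y2))).
  pose proof (Rmin_r (half_width - Rabs y1) (Rmin (y2 / 2) (height - y2))).
  pose proof (Rmin_l (y2 / 2) (height - y2)). pose proof (Rmin_r (y2 / 2) (height - y2)).
  set (rho := Rmin (half_width - Rabs y1) (Rmin (y2 / 2) (height - y2))) in *.
  assert (Hrho : 0 < rho) by (repeat apply Rmin_pos; lra).
  pose proof coord_lip_pos.
  exists (rho / coord_lip). split; [apply Rdiv_lt_0_compat; lra |]. intros v Hv.
  destruct (coords_near _ _ rho Hrho Hv) as [A1 A2].
  rewrite coord1_chart in A1. rewrite coord2_chart in A2.
  rewrite <- (chart_coord v). apply chart_polyU.
  - pose proof (Rabs_triang_inv (coord1 v) y1). lra.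
  - apply Rabs_le_between in A2. lra.
Qed.

Lemma frame_1_0 : frame 1 0 = (e1, e2).
Proof. unfold frame; f_equal; ring. Qed.

Lemma frame_0_1 : frame 0 1 = (- e2, e1).
Proof. unfold frame; f_equal; ring. Qed.

Lemma chart_in_rectangle_bound (q : pt) (y1 y2 : R) :
  Rabs y1 <= half_width -> 0 <= y2 <= height ->
  Rabs (fst (chart y1 y2) - fst q) + Rabs (snd (chart y1 y2) - snd q)
    <= Rabs (fst ustar - fst q) + Rabs (snd ustar - snd q)
       + (half_width + height) * (Rabs e1 + Rabs e2).
Proof.
  intros h1 h2. unfold chart, frame; cbn [fst snd].
  replace (fst ustar + (y1 * e1 - y2 * e2) - fst q) with ((fst ustar - fst q) + y1 * e1 + - (y2 * e2)) by ring.
  replace (snd ustar + (y1 * e2 + y2 * e1) - snd q) with ((snd ustar - snd q) + y1 * e2 + y2 * e1) by ring.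
  pose proof (Rabs_triang3 (fst ustar - fst q) (y1 * e1) (- (y2 * e2))).
  pose proof (Rabs_triang3 (snd ustar - snd q) (y1 * e2) (y2 * e1)).
  rewrite Rabs_Ropp, !Rabs_mult, (Rabs_pos_eq y2) in * by lra.
  pose proof (Rabs_pos e1); pose proof (Rabs_pos e2).
  assert (Rabs y1 * Rabs e1 <= half_width * Rabs e1) by (apply Rmult_le_compat_r; lra).
  assert (Rabs y1 * Rabs e2 <= half_width * Rabs e2) by (apply Rmult_le_compat_r; lra).
  assert (y2 * Rabs e2 <= height * Rabs e2) by (apply Rmult_le_compat_r; lra).
  assert (y2 * Rabs e1 <= height * Rabs e1) by (apply Rmult_le_compat_r; lra).
  lra.
Qed.

Lemma step_from_near_ustar (a1 a2 : R) :
  Rabs a1 < half_width -> 0 <= a2 < height ->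
  exists r, 0 < r /\ forall v, near_sq ustar v r -> polyU n p v ->
    interior_point (polyU n p) v /\ polyUbar n p (along v (frame a1 a2) 1).
Proof.
  intros Ha1 Ha2. pose proof coord_lip_pos. pose proof (Rabs_pos a1).
  pose proof (Rmin_l (half_width - Rabs a1) (height - a2)).
  pose proof (Rmin_r (half_width - Rabs a1) (height - a2)).
  assert (0 < Rmin (half_width - Rabs a1) (height - a2)) by (apply Rmin_pos; lra).
  set (rho := Rmin (half_width - Rabs a1) (height - a2) / 2) in *.
  assert (Hrho : 0 < rho) by (unfold rho; lra).
  assert (Hrho2 : rho <= (half_width - Rabs a1) / 2 /\ rho <= (height - a2) / 2) by (unfold rho; lra).
  exists (rho / coord_lip). split; [apply Rdiv_lt_0_compat; lra |]. intros v Hv HU.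
  destruct (coords_near ustar v rho Hrho Hv) as [Hy1 Hy2].
  rewrite <- chart_0_0, coord1_chart, Rminus_0_r in Hy1.
  rewrite <- chart_0_0, coord2_chart, Rminus_0_r in Hy2.
  pose proof (coord2_pos v HU). apply Rabs_le_between in Hy2.
  pose proof (Rabs_triang (coord1 v) a1).
  rewrite <- (chart_coord v), <- chart_shift, !Rmult_1_l.
  split; [apply interior_point_chart | apply chart_polyUbar]; lra.
Qed.

(** * The barrier argument *)

Section Solution.
Variable A : R.
Variable b : nat -> R.
Variable phi : pt -> R.
Hypothesis HA : 0 <= A.
Hypothesis Hsol : is_solution n p A b phi.

Lemma phi_continuous : continuous_on (polyUbar n p) phi.
Proof. apply Hsol. Qed.

Lemma phi_convex : convex_on (polyUbar n p) phi.
Proof. apply Hsol. Qed.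

Lemma phi_smooth : smooth_on (polyU n p) phi.
Proof. apply Hsol. Qed.

Lemma phi_hess_det (u : pt) : polyU n p u -> hess_det phi u = Vfun A n p u.
Proof. apply Hsol. Qed.

Definition slope : R := b (nxt n i) - b i.
Definition edge_value (y1 : R) : R := b i + (s + y1) * slope.

Lemma phi_chart_edge (y1 : R) : Rabs y1 <= half_width -> phi (chart y1 0) = edge_value y1.
Proof.
  intros h. destruct half_width_spec as [d1 [d2 d3]]. apply Rabs_le_between in h.
  rewrite chart_edge. destruct Hsol as (_ & _ & _ & _ & _ & Hedge).
  rewrite Hedge; [unfold edge_value, slope; ring | exact Hi | lra].
Qed.

Lemma phi_ustar : phi ustar = edge_value 0.
Proof. rewrite <- chart_0_0. apply phi_chart_edge. rewrite Rabs_R0. apply Rlt_le, half_width_spec. Qed.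

Definition excess (y1 y2 : R) : R := phi (chart y1 y2) - edge_value y1.
Definition top_slope : R := Rmax (excess (- half_width) height) (excess half_width height) / height.

Lemma excess_top (y1 : R) : Rabs y1 <= half_width -> excess y1 height <= top_slope * height.
Proof.
  intros h. destruct half_width_spec as [d1 [d2 d3]]. pose proof height_pos.
  unfold top_slope. replace (Rmax (excess (- half_width) height) (excess half_width height) / height * height)
    with (Rmax (excess (- half_width) height) (excess half_width height)) by (field; lra).
  set (t := (y1 + half_width) / (2 * half_width)).
  apply Rabs_le_between in h.
  assert (Ht : 0 <= t <= 1).
  { unfold t. split; [apply Rmult_le_pos; [lra | left; apply Rinv_0_lt_compat; lra] |].
    apply Rmult_le_reg_r with (2 * half_width); [lra |].
    replace ((y1 + half_width) / (2 * half_width) * (2 * half_width)) with (y1 + half_width) by (field; lra). lra. }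
  assert (EX : lerp (chart (- half_width) height) (chart half_width height) t = chart y1 height).
  { unfold lerp, chart, frame, t; simpl. f_equal; field; lra. }
  assert (Ub1 : polyUbar n p (chart (- half_width) height))
    by (apply chart_polyUbar; [rewrite Rabs_Ropp, Rabs_pos_eq |]; lra).
  assert (Ub2 : polyUbar n p (chart half_width height))
    by (apply chart_polyUbar; [rewrite Rabs_pos_eq |]; lra).
  pose proof (phi_convex _ _ t Ub1 Ub2 Ht) as Hcv. rewrite EX in Hcv.
  assert (El : edge_value y1 = (1 - t) * edge_value (- half_width) + t * edge_value half_width)
    by (unfold edge_value, t; field; lra).
  pose proof (Rmax_l (excess (- half_width) height) (excess half_width height)).
  pose proof (Rmax_r (excess (- half_width) height) (excess half_width height)).
  unfold excess in *. rewrite El. nra.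
Qed.

Lemma excess_le_linear (y1 y2 : R) :
  Rabs y1 <= half_width -> 0 <= y2 <= height -> excess y1 y2 <= top_slope * y2.
Proof.
  intros h1 h2. pose proof height_pos.
  set (t := y2 / height).
  assert (Ht : 0 <= t <= 1).
  { unfold t. split; [apply Rmult_le_pos; [lra | left; apply Rinv_0_lt_compat; lra] |].
    apply Rmult_le_reg_r with height; [lra |]. replace (y2 / height * height) with y2 by (field; lra). lra. }
  assert (EX : lerp (chart y1 0) (chart y1 height) t = chart y1 y2).
  { unfold lerp, chart, frame, t; simpl. f_equal; field; lra. }
  assert (Ub1 : polyUbar n p (chart y1 0)) by (apply chart_polyUbar; lra).
  assert (Ub2 : polyUbar n p (chart y1 height)) by (apply chart_polyUbar; lra).
  pose proof (phi_convex _ _ t Ub1 Ub2 Ht) as Hcv. rewrite EX, phi_chart_edge in Hcv by auto.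
  pose proof (excess_top y1 h1).
  replace (top_slope * y2) with (t * (top_slope * height)) by (unfold t; field; lra).
  unfold excess in *. nra.
Qed.

Lemma exists_V_lower_bound : exists lam, 0 < lam /\ forall y1 y2,
  Rabs y1 <= half_width -> 0 < y2 <= height -> lam <= Vfun A n p (chart y1 y2).
Proof.
  pose proof height_pos. destruct half_width_spec as [d1 [d2 d3]].
  set (B := Rabs (fst ustar - fst (p 0%nat)) + Rabs (snd ustar - snd (p 0%nat))
            + (half_width + height) * (Rabs e1 + Rabs e2)).
  assert (HB : 0 <= B).
  { unfold B. pose proof (Rabs_pos (fst ustar - fst (p 0%nat))).
    pose proof (Rabs_pos (snd ustar - snd (p 0%nat))). pose proof (Rabs_pos e1). pose proof (Rabs_pos e2). nra. }
  exists (/ (2 * (B + 1))). split; [apply Rinv_0_lt_compat; lra |].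
  intros y1 y2 h1 h2.
  set (z := vsub (chart y1 y2) (p 0%nat)).
  assert (Hz : fst z <> 0 \/ snd z <> 0).
  { pose proof (chart_polyU y1 y2 h1 h2 0%nat ltac:(lia)) as Q.
    destruct (Req_dec (fst z) 0) as [h|h]; [| left; auto].
    destruct (Req_dec (snd z) 0) as [h'|h']; [| right; auto].
    exfalso. unfold cross in Q. fold z in Q. rewrite h, h' in Q. lra. }
  assert (Hzb : Rabs (fst z) + Rabs (snd z) <= B + 1)
    by (pose proof (chart_in_rectangle_bound (p 0%nat) y1 y2 h1 ltac:(lra)); unfold B, z, vsub; cbn [fst snd]; lra).
  pose proof (inv_two_vnorm_ge z _ Hz Hzb).
  assert (Hnn : forall k, 0 <= / (2 * vnorm (vsub (chart y1 y2) (p k))))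
    by (intro k; apply Rinv_nonneg; pose proof (sqrt_pos (dot (vsub (chart y1 y2) (p k)) (vsub (chart y1 y2) (p k)))); unfold vnorm; lra).
  pose proof (sumR_ge_first n _ Hnn ltac:(lia)) as HS. cbv beta in HS. fold z in HS.
  unfold Vfun. lra.
Qed.

Definition V_lower : R := proj1_sig (constructive_indefinite_description _ exists_V_lower_bound).

Lemma V_lower_spec : 0 < V_lower /\ forall y1 y2,
  Rabs y1 <= half_width -> 0 < y2 <= height -> V_lower <= Vfun A n p (chart y1 y2).
Proof. exact (proj2_sig (constructive_indefinite_description _ exists_V_lower_bound)). Qed.

Definition barrier_k : R := Rmin 1 (V_lower * elen2 ^ 2 * half_width ^ 2 / 3).

Lemma barrier_k_spec : 0 < barrier_k /\ 3 * barrier_k ^ 2 < 2 * V_lower * elen2 ^ 2 * half_width ^ 2.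
Proof.
  destruct V_lower_spec as [Hl _]. pose proof elen2_pos. destruct half_width_spec as [d1 _].
  assert (Ha : 0 < V_lower * elen2 ^ 2 * half_width ^ 2).
  { assert (0 < elen2 ^ 2) by (apply pow_lt; lra). assert (0 < half_width ^ 2) by (apply pow_lt; lra).
    apply Rmult_lt_0_compat; [apply Rmult_lt_0_compat |]; lra. }
  pose proof (Rmin_l 1 (V_lower * elen2 ^ 2 * half_width ^ 2 / 3)).
  pose proof (Rmin_r 1 (V_lower * elen2 ^ 2 * half_width ^ 2 / 3)).
  assert (Hk : 0 < barrier_k) by (apply Rmin_pos; lra).
  split; [exact Hk |]. fold barrier_k in *.
  assert (barrier_k ^ 2 <= barrier_k) by nra. lra.
Qed.

Definition barrier (y1 y2 : R) : R :=
  (top_slope + barrier_k) * y2 - barrier_k * log_barrier height y2 * (1 - y1 ^ 2 / half_width ^ 2).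
Definition barrier_gap (y1 y2 : R) : R := excess y1 y2 - barrier y1 y2.

Lemma barrier_gap_bottom (y1 : R) : Rabs y1 <= half_width -> barrier_gap y1 0 = 0.
Proof.
  intros. unfold barrier_gap, barrier, excess.
  rewrite phi_chart_edge, log_barrier_0 by auto. ring.
Qed.

Lemma barrier_gap_top (y1 : R) : Rabs y1 <= half_width -> barrier_gap y1 height <= 0.
Proof.
  intros h. pose proof height_pos. destruct half_width_spec as [d1 _]. destruct barrier_k_spec as [Hk _].
  pose proof (excess_le_linear y1 height h ltac:(lra)). unfold barrier_gap, barrier.
  rewrite log_barrier_T by auto.
  assert (0 <= y1 ^ 2 / half_width ^ 2)
    by (apply Rmult_le_pos; [apply pow2_ge_0 | left; apply Rinv_0_lt_compat, pow_lt; lra]).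
  assert (0 <= barrier_k * height * (y1 ^ 2 / half_width ^ 2)) by (apply Rmult_le_pos; [nra | auto]).
  lra.
Qed.

Lemma barrier_gap_side (y1 y2 : R) :
  Rabs y1 = half_width -> 0 <= y2 <= height -> barrier_gap y1 y2 <= 0.
Proof.
  intros h h2. pose proof height_pos. destruct half_width_spec as [d1 _]. destruct barrier_k_spec as [Hk _].
  pose proof (excess_le_linear y1 y2 ltac:(lra) h2). unfold barrier_gap, barrier.
  assert (E : y1 ^ 2 = half_width ^ 2) by (rewrite <- h; unfold Rabs; destruct (Rcase_abs y1); ring).
  rewrite E. replace (1 - half_width ^ 2 / half_width ^ 2) with 0 by (field; lra). nra.
Qed.

Lemma continuity_2d_pt_phi_chart_clamp (a0 c0 : R) :
  continuity_2d_pt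
    (fun a c => phi (chart (clamp (- half_width) half_width a) (clamp 0 height c))) a0 c0.
Proof.
  destruct half_width_spec as [d1 _]. pose proof height_pos.
  set (y1 := clamp (- half_width) half_width a0). set (y2 := clamp 0 height c0).
  assert (Hy1 := clamp_in (- half_width) half_width a0 ltac:(lra)).
  assert (Hy2 := clamp_in 0 height c0 ltac:(lra)). fold y1 y2 in Hy1, Hy2.
  assert (Hub : polyUbar n p (chart y1 y2)) by (apply chart_polyUbar; [apply Rabs_le_between |]; lra).
  set (S := Rabs e1 + Rabs e2 + 1).
  assert (HS : 1 <= S) by (unfold S; pose proof (Rabs_pos e1); pose proof (Rabs_pos e2); lra).
  intros eps.
  destruct (continuous_within_near_sq _ phi _ eps (phi_continuous _ Hub) (cond_pos eps)) as [r [Hr Hnear]].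
  exists (mkposreal (r / S) ltac:(apply Rdiv_lt_0_compat; lra)). simpl. intros a c ha hc.
  set (z1 := clamp (- half_width) half_width a). set (z2 := clamp 0 height c).
  assert (Hz1 := clamp_in (- half_width) half_width a ltac:(lra)).
  assert (Hz2 := clamp_in 0 height c ltac:(lra)). fold z1 z2 in Hz1, Hz2.
  assert (Hub2 : polyUbar n p (chart z1 z2)) by (apply chart_polyUbar; [apply Rabs_le_between |]; lra).
  assert (M1 : Rabs (z1 - y1) * S < r).
  { apply Rmult_lt_reg_r with (/ S); [apply Rinv_0_lt_compat; lra |].
    replace (Rabs (z1 - y1) * S * / S) with (Rabs (z1 - y1)) by (field; lra).
    eapply Rle_lt_trans; [apply clamp_lipschitz; lra | exact ha]. }
  assert (M2 : Rabs (z2 - y2) * S < r).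
  { apply Rmult_lt_reg_r with (/ S); [apply Rinv_0_lt_compat; lra |].
    replace (Rabs (z2 - y2) * S * / S) with (Rabs (z2 - y2)) by (field; lra).
    eapply Rle_lt_trans; [apply clamp_lipschitz; lra | exact hc]. }
  apply Hnear; [| exact Hub2].
  pose proof (Rabs_pos e1); pose proof (Rabs_pos e2); pose proof (Rabs_pos (z1 - y1)); pose proof (Rabs_pos (z2 - y2)).
  unfold near_sq, chart, frame; cbn [fst snd]. split.
  - replace (fst ustar + (z1 * e1 - z2 * e2) - (fst ustar + (y1 * e1 - y2 * e2)))
      with ((z1 - y1) * e1 + - ((z2 - y2) * e2)) by ring.
    eapply Rle_lt_trans; [apply Rabs_triang |]. rewrite Rabs_Ropp, !Rabs_mult. unfold S in *. nra.
  - replace (snd ustar + (z1 * e2 + z2 * e1) - (snd ustar + (y1 * e2 + y2 * e1)))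
      with ((z1 - y1) * e2 + (z2 - y2) * e1) by ring.
    eapply Rle_lt_trans; [apply Rabs_triang |]. rewrite !Rabs_mult. unfold S in *. nra.
Qed.

Lemma continuity_2d_pt_barrier_gap_clamp (a c : R) :
  continuity_2d_pt
    (fun a c => barrier_gap (clamp (- half_width) half_width a) (clamp 0 height c)) a c.
Proof.
  destruct half_width_spec as [d1 _]. pose proof height_pos.
  assert (C1 := continuity_2d_pt_phi_chart_clamp a c).
  assert (C2 : continuity_2d_pt (fun u v => edge_value (clamp (- half_width) half_width u)) a c).
  { apply continuity_2d_pt_of_fst, (continuity_pt_comp (clamp (- half_width) half_width) edge_value).
    - apply continuity_pt_clamp; lra.
    - apply (continuity_pt_of_is_derive _ _ slope). unfold edge_value. auto_derive; auto; ring. }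
  assert (C3 : continuity_2d_pt (fun u v => (top_slope + barrier_k) * clamp 0 height v) a c).
  { apply continuity_2d_pt_of_snd, (continuity_pt_comp (clamp 0 height) (fun t => (top_slope + barrier_k) * t)).
    - apply continuity_pt_clamp; lra.
    - apply (continuity_pt_of_is_derive _ _ (top_slope + barrier_k)). auto_derive; auto; ring. }
  assert (C4 : continuity_2d_pt (fun u v => log_barrier height (clamp 0 height v)) a c)
    by (apply continuity_2d_pt_of_snd, continuity_pt_log_barrier_clamp; lra).
  assert (C5 : continuity_2d_pt
                 (fun u v => 1 - clamp (- half_width) half_width u ^ 2 / half_width ^ 2) a c).
  { apply continuity_2d_pt_of_fst,
      (continuity_pt_comp (clamp (- half_width) half_width) (fun t => 1 - t ^ 2 / half_width ^ 2)).
    - apply continuity_pt_clamp; lra.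
    - apply (continuity_pt_of_is_derive _ _ (- (2 * clamp (- half_width) half_width a / half_width ^ 2))).
      auto_derive; [auto | field; lra]. }
  assert (C6 := continuity_2d_pt_mult _ _ a c C4 C5).
  assert (C7 := continuity_2d_pt_mult _ _ a c (continuity_2d_pt_const a c barrier_k) C6).
  assert (C8 := continuity_2d_pt_minus _ _ a c (continuity_2d_pt_minus _ _ a c C1 C2)
                  (continuity_2d_pt_minus _ _ a c C3 C7)).
  eapply continuity_2d_pt_ext; [| exact C8].
  intros u v. unfold barrier_gap, excess, barrier. simpl. ring.
Qed.

Section InteriorMax.
Variables x0 y0 : R.
Hypothesis Hx0 : Rabs x0 < half_width.
Hypothesis Hy0 : 0 < y0 < height.
Hypothesis Hmax : forall y1 y2, Rabs y1 <= half_width -> 0 <= y2 <= height ->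
  barrier_gap y1 y2 <= barrier_gap x0 y0.

Let theta : R := 1 - x0 ^ 2 / half_width ^ 2.

Lemma theta_range : 0 <= theta <= 1.
Proof.
  destruct half_width_spec as [d1 _]. unfold theta. apply Rabs_lt_between in Hx0.
  assert (0 < half_width ^ 2) by (apply pow_lt; lra).
  assert (0 <= x0 ^ 2 / half_width ^ 2) by (apply Rmult_le_pos; [apply pow2_ge_0 | left; apply Rinv_0_lt_compat; lra]).
  assert (x0 ^ 2 / half_width ^ 2 <= 1).
  { apply Rmult_le_reg_r with (half_width ^ 2); [lra |].
    replace (x0 ^ 2 / half_width ^ 2 * half_width ^ 2) with (x0 ^ 2) by (field; lra). nra. }
  lra.
Qed.

Lemma second_difference_at_max (a1 a2 t : R) :
  Rabs (x0 + t * a1) <= half_width -> 0 <= y0 + t * a2 <= height ->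
  Rabs (x0 - t * a1) <= half_width -> 0 <= y0 - t * a2 <= height ->
  phi (along (chart x0 y0) (frame a1 a2) t) + phi (along (chart x0 y0) (frame a1 a2) (- t))
    - 2 * phi (chart x0 y0)
  <= barrier (x0 + t * a1) (y0 + t * a2) + barrier (x0 - t * a1) (y0 - t * a2) - 2 * barrier x0 y0.
Proof.
  intros h1 h2 h3 h4.
  rewrite <- !chart_shift. replace (x0 + - t * a1) with (x0 - t * a1) by ring.
  replace (y0 + - t * a2) with (y0 - t * a2) by ring.
  pose proof (Hmax _ _ h1 h2). pose proof (Hmax _ _ h3 h4).
  assert (edge_value (x0 + t * a1) + edge_value (x0 - t * a1) - 2 * edge_value x0 = 0)
    by (unfold edge_value; ring).
  unfold barrier_gap, excess in *. lra.
Qed.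

Lemma hess_form_tangent_at_max :
  hess_form phi (chart x0 y0) (frame 1 0)
    <= 2 * barrier_k * log_barrier height y0 / half_width ^ 2.
Proof.
  destruct half_width_spec as [d1 _].
  apply (hess_form_le_of_second_difference (polyU n p)); [apply phi_smooth | apply interior_point_chart; auto |].
  intros eta Heta. exists (half_width - Rabs x0). split; [lra |]. intros t Ht.
  assert (Hx : forall z, Rabs z <= t -> Rabs (x0 + z) <= half_width)
    by (intros z hz; pose proof (Rabs_triang x0 z); lra).
  eapply Rle_trans; [apply (second_difference_at_max 1 0 t) |].
  - apply Hx. rewrite Rmult_1_r, Rabs_pos_eq; lra.
  - rewrite Rmult_0_r; lra.
  - replace (x0 - t * 1) with (x0 + - t) by ring. apply Hx. rewrite Rabs_Ropp, Rabs_pos_eq; lra.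
  - rewrite Rmult_0_r; lra.
  - assert (0 < half_width ^ 2) by (apply pow_lt; lra).
    assert (0 < t ^ 2) by (apply pow_lt; lra).
    replace (barrier (x0 + t * 1) (y0 + t * 0) + barrier (x0 - t * 1) (y0 - t * 0) - 2 * barrier x0 y0)
      with (2 * barrier_k * log_barrier height y0 / half_width ^ 2 * t ^ 2)
      by (unfold barrier; replace (y0 + t * 0) with y0 by ring; replace (y0 - t * 0) with y0 by ring;
          field; lra).
    nra.
Qed.

Lemma hess_form_normal_at_max :
  hess_form phi (chart x0 y0) (frame 0 1) <= - barrier_k * theta * log_barrier_d2 height y0.
Proof.
  destruct half_width_spec as [d1 _]. destruct barrier_k_spec as [Hk _]. pose proof theta_range.
  apply (hess_form_le_of_second_difference (polyU n p)); [apply phi_smooth | apply interior_point_chart; auto |].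
  intros eta Heta.
  set (kt := barrier_k * theta). assert (Hkt : 0 <= kt) by (unfold kt; nra).
  assert (Hr : 0 < Rmin y0 (height - y0)) by (apply Rmin_pos; lra).
  pose proof (Rmin_l y0 (height - y0)). pose proof (Rmin_r y0 (height - y0)).
  destruct (second_difference_lower_bound (log_barrier height) (log_barrier_d1 height) y0
              (log_barrier_d2 height y0) _ (eta / (kt + 1)) Hr) as [tau [Htau Hsd]].
  - intros t Ht. apply Rabs_lt_between in Ht. apply is_derive_log_barrier; lra.
  - apply is_derive_log_barrier_d1; lra.
  - apply Rdiv_lt_0_compat; lra.
  - exists (Rmin tau (Rmin y0 (height - y0))). split; [repeat apply Rmin_pos; lra |].
    intros t Ht. pose proof (Rmin_l tau (Rmin y0 (height - y0))).
    pose proof (Rmin_r tau (Rmin y0 (height - y0))).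
    specialize (Hsd t ltac:(lra)).
    eapply Rle_trans; [apply (second_difference_at_max 0 1 t) |];
      rewrite ?Rmult_0_r, ?Rplus_0_r, ?Rminus_0_r, ?Rmult_1_r; try lra.
    replace (barrier x0 (y0 + t) + barrier x0 (y0 - t) - 2 * barrier x0 y0)
      with (- kt * (log_barrier height (y0 + t) + log_barrier height (y0 - t) - 2 * log_barrier height y0))
      by (unfold barrier, kt, theta; ring).
    assert (0 < t ^ 2) by (apply pow_lt; lra).
    assert (Heta' : kt * (eta / (kt + 1)) <= eta).
    { apply Rmult_le_reg_r with (kt + 1); [lra |].
      replace (kt * (eta / (kt + 1)) * (kt + 1)) with (kt * eta) by (field; lra). nra. }
    assert (kt * ((log_barrier_d2 height y0 - eta / (kt + 1)) * t ^ 2)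
            <= kt * (log_barrier height (y0 + t) + log_barrier height (y0 - t) - 2 * log_barrier height y0))
      by (apply Rmult_le_compat_l; lra).
    unfold kt in *. nra.
Qed.

Lemma barrier_gap_no_interior_max : False.
Proof.
  pose proof height_pos. destruct half_width_spec as [d1 _]. destruct barrier_k_spec as [Hk Hk2].
  destruct V_lower_spec as [Hl Hlam]. pose proof elen2_pos. pose proof theta_range.
  assert (Ho := interior_point_chart x0 y0 Hx0 Hy0).
  set (u := chart x0 y0) in *.
  set (g := log_barrier height y0). set (g2 := log_barrier_d2 height y0).
  set (Qe := hess_form phi u (frame 1 0)). set (Qm := hess_form phi u (frame 0 1)).
  assert (Se : Qe <= 2 * barrier_k * g / half_width ^ 2) by apply hess_form_tangent_at_max.
  assert (Sm : Qm <= - barrier_k * theta * g2) by apply hess_form_normal_at_max.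
  assert (Sm0 : 0 <= Qm)
    by (apply (convex_hess_form_nonneg (polyU n p) (polyUbar n p));
        [apply phi_smooth | apply polyU_polyUbar | apply phi_convex | exact Ho]).
  assert (Sdet : V_lower * elen2 ^ 2 <= Qe * Qm).
  { assert (HU : polyU n p u) by (apply chart_polyU; lra).
    pose proof (hess_form_orthogonal_product phi u e1 e2
                  (smooth_mixed_partials_eq _ phi u phi_smooth Ho)) as Hprod.
    rewrite phi_hess_det in Hprod by exact HU. fold elen2 in Hprod.
    pose proof (Hlam x0 y0 ltac:(lra) ltac:(lra)).
    assert (0 <= elen2 ^ 2) by apply pow2_ge_0.
    unfold Qe, Qm. rewrite frame_1_0, frame_0_1. fold u in H2. nra. }
  destruct (log_barrier_concavity height y0 ltac:(lra)) as [Hg2 Hgg2]. fold g g2 in Hg2, Hgg2.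
  assert (Hg : 0 <= g) by (apply log_barrier_bounds; lra).
  assert (0 < half_width ^ 2) by (apply pow_lt; lra).
  assert (Hprod : Qe * Qm <= 2 * barrier_k * g / half_width ^ 2 * (- barrier_k * theta * g2)).
  { apply Rle_trans with (2 * barrier_k * g / half_width ^ 2 * Qm); [apply Rmult_le_compat_r; lra |].
    apply Rmult_le_compat_l; [| lra].
    apply Rmult_le_pos; [nra | left; apply Rinv_0_lt_compat; lra]. }
  assert (0 <= - (g * g2)) by nra.
  assert (theta * - (g * g2) <= 3 / 4) by nra.
  assert (Hb : 2 * barrier_k * g / half_width ^ 2 * (- barrier_k * theta * g2) * (2 * half_width ^ 2)
               = 4 * barrier_k ^ 2 * (theta * - (g * g2))) by (field; lra).
  assert (Qe * Qm * (2 * half_width ^ 2) <= 3 * barrier_k ^ 2).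
  { apply Rle_trans with (2 * barrier_k * g / half_width ^ 2 * (- barrier_k * theta * g2) * (2 * half_width ^ 2));
      [apply Rmult_le_compat_r; lra | rewrite Hb; nra]. }
  nra.
Qed.

End InteriorMax.

Lemma barrier_gap_nonpos (y1 y2 : R) :
  Rabs y1 <= half_width -> 0 <= y2 <= height -> barrier_gap y1 y2 <= 0.
Proof.
  intros h1 h2. pose proof height_pos. destruct half_width_spec as [d1 _].
  destruct (continuity_2d_max_on_rectangle _ (- half_width) half_width 0 height ltac:(lra) ltac:(lra)
              continuity_2d_pt_barrier_gap_clamp) as [x0 [y0 [Hx0 [Hy0 Hm]]]].
  rewrite !clamp_id in Hm by lra.
  assert (Hmax : forall a c, Rabs a <= half_width -> 0 <= c <= height -> barrier_gap a c <= barrier_gap x0 y0).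
  { intros a c ha hc. apply Rabs_le_between in ha. specialize (Hm a c ha hc). rewrite !clamp_id in Hm; lra. }
  assert (Hx0' : Rabs x0 <= half_width) by (apply Rabs_le_between; lra).
  enough (barrier_gap x0 y0 <= 0) by (pose proof (Hmax y1 y2 h1 h2); lra).
  destruct (Rle_dec (barrier_gap x0 y0) 0) as [h|h]; [exact h | exfalso].
  destruct (Req_dec y0 0) as [->|hy0]; [rewrite barrier_gap_bottom in h; lra |].
  destruct (Req_dec y0 height) as [->|hyT]; [pose proof (barrier_gap_top x0 Hx0'); lra |].
  destruct (Req_dec (Rabs x0) half_width) as [hx|hx]; [pose proof (barrier_gap_side x0 y0 hx Hy0); lra |].
  apply (barrier_gap_no_interior_max x0 y0); [lra | lra | exact Hmax].
Qed.

(** * Boundary behaviour of the gradient *)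

Lemma phi_drop_along_normal (K : R) :
  exists h, 0 < h < height /\ phi (chart 0 h) - phi ustar <= - K * h.
Proof.
  pose proof height_pos. destruct half_width_spec as [d1 _]. destruct barrier_k_spec as [Hk _].
  set (Z := Rabs (top_slope + barrier_k + K) / barrier_k + 1).
  assert (HZ : 1 <= Z).
  { unfold Z. assert (0 <= Rabs (top_slope + barrier_k + K) / barrier_k)
      by (apply Rmult_le_pos; [apply Rabs_pos | left; apply Rinv_0_lt_compat; lra]). lra. }
  (* chosen so that [sqrt (1 + ln (height / h)) >= Z] *)
  set (h := height * exp (- Z ^ 2)).
  assert (He : exp (- Z ^ 2) < 1).
  { rewrite <- exp_0. apply exp_increasing. assert (0 < Z ^ 2) by (apply pow_lt; lra). lra. }
  assert (Hh : 0 < h < height) by (unfold h; pose proof (exp_pos (- Z ^ 2)); split; nra).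
  exists h. split; [exact Hh |].
  pose proof (barrier_gap_nonpos 0 h ltac:(rewrite Rabs_R0; lra) ltac:(lra)) as HM.
  unfold barrier_gap, excess, barrier in HM. rewrite phi_ustar.
  assert (HT : height / h = exp (Z ^ 2)).
  { unfold h. rewrite exp_Ropp. field. split; [pose proof (exp_pos (Z ^ 2)); lra | lra]. }
  unfold log_barrier in HM. rewrite HT, ln_exp in HM.
  assert (HS : Z <= sqrt (1 + Z ^ 2)) by (rewrite <- (sqrt_pow2 Z) at 1 by lra; apply sqrt_le_1_alt; lra).
  assert (HkZ : barrier_k * Z = Rabs (top_slope + barrier_k + K) + barrier_k) by (unfold Z; field; lra).
  pose proof (Rle_abs (top_slope + barrier_k + K)).
  replace (0 ^ 2 / half_width ^ 2) with 0 in HM by (field; lra).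
  assert (barrier_k * h * Z <= barrier_k * h * sqrt (1 + Z ^ 2)) by (apply Rmult_le_compat_l; [nra | auto]).
  assert (barrier_k * h * Z = h * (Rabs (top_slope + barrier_k + K) + barrier_k)) by (rewrite <- HkZ; ring).
  nra.
Qed.

Lemma grad_slope_near_ustar (a1 a2 eps : R) :
  Rabs a1 < half_width -> 0 <= a2 < height -> 0 < eps ->
  exists r, 0 < r /\ forall v, near_sq ustar v r -> polyU n p v ->
    dot (grad phi v) (frame a1 a2) < phi (chart a1 a2) - phi ustar + eps.
Proof.
  intros Ha1 Ha2 Heps. pose proof height_pos. destruct half_width_spec as [d1 _].
  assert (Hua : polyUbar n p (chart a1 a2)) by (apply chart_polyUbar; lra).
  assert (Hu0 : polyUbar n p ustar)
    by (rewrite <- chart_0_0; apply chart_polyUbar; [rewrite Rabs_R0 |]; lra).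
  destruct (continuous_within_near_sq _ phi _ (eps / 2) (phi_continuous _ Hua) ltac:(lra)) as [r1 [Hr1 H1]].
  destruct (continuous_within_near_sq _ phi _ (eps / 2) (phi_continuous _ Hu0) ltac:(lra)) as [r2 [Hr2 H2]].
  destruct (step_from_near_ustar a1 a2 Ha1 Ha2) as [r3 [Hr3 H3]].
  pose proof (Rmin_l r1 (Rmin r2 r3)). pose proof (Rmin_r r1 (Rmin r2 r3)).
  pose proof (Rmin_l r2 r3). pose proof (Rmin_r r2 r3).
  exists (Rmin r1 (Rmin r2 r3)). split; [repeat apply Rmin_pos; lra |].
  intros v Hv HU.
  destruct (H3 v (near_sq_le ustar v (Rmin r1 (Rmin r2 r3)) r3 ltac:(lra) Hv) HU) as [Ho HD].
  pose proof (convex_grad_slope_le _ _ phi v (frame a1 a2) 1 phi_smooth (polyU_polyUbar n p)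
                phi_convex Ho ltac:(lra) HD).
  assert (Hnear1 : near_sq (chart a1 a2) (along v (frame a1 a2) 1) r1).
  { destruct Hv as [Hv1 Hv2]. unfold near_sq, along, chart; cbn [fst snd].
    replace (fst v + 1 * fst (frame a1 a2) - (fst ustar + fst (frame a1 a2))) with (fst v - fst ustar) by ring.
    replace (snd v + 1 * snd (frame a1 a2) - (snd ustar + snd (frame a1 a2))) with (snd v - snd ustar) by ring.
    lra. }
  specialize (H1 _ Hnear1 HD).
  specialize (H2 v (near_sq_le ustar v (Rmin r1 (Rmin r2 r3)) r2 ltac:(lra) Hv) (polyU_polyUbar n p v HU)).
  apply Rabs_lt_between in H1. apply Rabs_lt_between in H2.
  lra.
Qed.

Lemma grad_normal_limit :
  filterlim (fun u => dot (grad phi u)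
     (snd (vsub (p (nxt n i)) (p i)) / vnorm (vsub (p (nxt n i)) (p i)),
      - fst (vsub (p (nxt n i)) (p i)) / vnorm (vsub (p (nxt n i)) (p i))))
   (within (polyU n p) (locally ustar)) (Rbar_locally p_infty).
Proof.
  intros P [M HM]. unfold filtermap. apply within_locally_of_near_sq.
  pose proof height_pos. destruct half_width_spec as [d1 _]. pose proof elen2_pos.
  assert (Hlen : vnorm (vsub (p (nxt n i)) (p i)) = sqrt elen2)
    by (unfold vnorm, dot, elen2, e1, e2; f_equal; ring).
  assert (HV : 0 < sqrt elen2) by (apply sqrt_lt_R0; auto).
  destruct (phi_drop_along_normal (Rabs M * sqrt elen2 + 2)) as [h [Hh Hdrop]].
  destruct (grad_slope_near_ustar 0 h h ltac:(rewrite Rabs_R0; lra) ltac:(lra) ltac:(lra)) as [r [Hr Hnear]].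
  exists r. split; [exact Hr |]. intros v Hv HU. apply HM.
  specialize (Hnear v Hv HU).
  rewrite Hlen. fold e1 e2. unfold dot, grad, frame in *; cbn [fst snd] in *.
  set (g1 := pd false phi v) in *. set (g2 := pd true phi v) in *.
  assert (Hg : g1 * - e2 + g2 * e1 < 1 - (Rabs M * sqrt elen2 + 2)).
  { apply Rmult_lt_reg_l with h; [lra |].
    replace (h * (g1 * - e2 + g2 * e1)) with (g1 * (0 * e1 - h * e2) + g2 * (0 * e2 + h * e1)) by ring.
    lra. }
  replace (g1 * (e2 / sqrt elen2) + g2 * (- e1 / sqrt elen2)) with (- (g1 * - e2 + g2 * e1) / sqrt elen2)
    by (field; lra).
  apply Rmult_lt_reg_r with (sqrt elen2); [exact HV |].
  replace (- (g1 * - e2 + g2 * e1) / sqrt elen2 * sqrt elen2) with (- (g1 * - e2 + g2 * e1)) by (field; lra).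
  pose proof (Rle_abs M). assert (M * sqrt elen2 <= Rabs M * sqrt elen2) by (apply Rmult_le_compat_r; lra).
  lra.
Qed.

Lemma grad_tangent_limit :
  filterlim (fun u => dot (grad phi u) (vsub (p (nxt n i)) (p i)))
   (within (polyU n p) (locally ustar)) (locally (b (nxt n i) - b i)).
Proof.
  apply filterlim_locally. intros eps. apply within_locally_of_near_sq.
  pose proof height_pos. destruct half_width_spec as [d1 _]. pose proof (cond_pos eps).
  set (h := half_width / 2).
  assert (Hh : 0 < h < half_width) by (unfold h; lra).
  destruct (grad_slope_near_ustar h 0 (eps * h) ltac:(rewrite Rabs_pos_eq; lra) ltac:(lra) ltac:(nra))
    as [r1 [Hr1 H1]].
  destruct (grad_slope_near_ustar (- h) 0 (eps * h) ltac:(rewrite Rabs_Ropp, Rabs_pos_eq; lra) ltac:(lra) ltac:(nra))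
    as [r2 [Hr2 H2]].
  pose proof (Rmin_l r1 r2). pose proof (Rmin_r r1 r2).
  exists (Rmin r1 r2). split; [apply Rmin_pos; lra |]. intros v Hv HU. apply ball_R_of_Rabs.
  specialize (H1 v (near_sq_le ustar v (Rmin r1 r2) r1 ltac:(lra) Hv) HU).
  specialize (H2 v (near_sq_le ustar v (Rmin r1 r2) r2 ltac:(lra) Hv) HU).
  rewrite phi_chart_edge, phi_ustar in H1, H2 by (rewrite ?Rabs_Ropp, Rabs_pos_eq; lra).
  unfold edge_value, dot, grad, frame in *. cbn [fst snd] in *. fold e1 e2. fold slope.
  set (L := pd false phi v * e1 + pd true phi v * e2) in *.
  assert (E1 : pd false phi v * (h * e1 - 0 * e2) + pd true phi v * (h * e2 + 0 * e1) = h * L)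
    by (unfold L; ring).
  assert (E2 : pd false phi v * (- h * e1 - 0 * e2) + pd true phi v * (- h * e2 + 0 * e1) = - (h * L))
    by (unfold L; ring).
  rewrite E1 in H1. rewrite E2 in H2.
  assert (h * L < h * (slope + eps)) by (unfold slope in *; nra).
  assert (h * (slope - eps) < h * L) by (unfold slope in *; nra).
  apply Rabs_lt_between. split; [apply Rmult_lt_reg_l with h | apply Rmult_lt_reg_l with h]; lra.
Qed.

End Solution.
End EdgeChart.

Theorem mainTheorem5 (n : nat) (p : nat -> pt) (A : R) (b : nat -> R)
    (phi : pt -> R) (i : nat) (s : R) :
  (3 <= n)%nat ->
  ccw_convex_polygon n p ->
  0 <= A ->
  is_solution n p A b phi ->
  (i < n)%nat ->
  0 < s < 1 ->
  let ustar := lerp (p i) (p (nxt n i)) s in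
  let e := vsub (p (nxt n i)) (p i) in
  let nu := (snd e / vnorm e, - fst e / vnorm e) in
  filterlim (fun u => dot (grad phi u) nu)
    (within (polyU n p) (locally ustar)) (Rbar_locally p_infty) /\
  filterlim (fun u => dot (grad phi u) e)
    (within (polyU n p) (locally ustar)) (locally (b (nxt n i) - b i)).
Proof.
  intros Hn Hc HA Hsol Hi Hs. cbv zeta. split.
  - eapply grad_normal_limit; eassumption.
  - eapply grad_tangent_limit; eassumption.
Qed.
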